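(* A countable equivalence structure with bounded character and infinitely many infinite equivalence classes is relatively $\Delta^0_2$ categorical but not relatively $\Delta^0_2$ bi-embeddably categorical.
   Context: An equivalence structure $\mathcal{A}=(A,E)$ has universe $A\subseteq\omega$ and an equivalence relation $E$ on $A$; structures are identified with their atomic diagrams. $\mathcal{A}$ has bounded character if there is a finite $k$ such that all finite equivalence classes have size at most $k$. A countable structure $\mathcal{A}$ is relatively $\Delta^0_2$ categorical if for every structure $\mathcal{B}$ isomorphic to $\mathcal{A}$ there is an isomorphism between them that is $\Delta^0_2$ relative to $\mathcal{A}\oplus\mathcal{B}$. Two structures are bi-embeddable if each embeds into the other; $\mathcal{A}$ is relatively $\Delta^0_2$ bi-embeddably categorical if for every structure $\mathcal{B}$ bi-embeddable with $\mathcal{A}$ there are embeddings $\mathcal{A}\hookrightarrow\mathcal{B}$ and $\mathcal{B}\hookrightarrow\mathcal{A}$ that are $\Delta^0_2$ relative to $\mathcal{A}\oplus\mathcal{B}$. *)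

From Stdlib Require Import Arith List Cantor.
Import ListNotations.

Inductive code : Type :=
| CZero : code
| CSucc : code
| CProj : nat -> code
| COracle : code
| CComp : code -> list code -> code
| CPrec : code -> code -> code
| CMu : code -> code.

Definition oracle := nat -> bool.

Inductive eval (X : oracle) : code -> list nat -> nat -> Prop :=
| ev_zero xs : eval X CZero xs 0
| ev_succ xs : eval X CSucc xs (S (hd 0 xs))
| ev_proj i xs : eval X (CProj i) xs (nth i xs 0)
| ev_oracle xs : eval X COracle xs (if X (hd 0 xs) then 1 else 0)
| ev_comp f gs xs ys y :
    evals X gs xs ys -> eval X f ys y -> eval X (CComp f gs) xs y
| ev_prec0 f g xs y : eval X f xs y -> eval X (CPrec f g) (0 :: xs) y
| ev_precS f g n xs z y :
    eval X (CPrec f g) (n :: xs) z -> eval X g (n :: z :: xs) y ->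
    eval X (CPrec f g) (S n :: xs) y
| ev_mu f xs n :
    eval X f (n :: xs) 0 ->
    (forall m, m < n -> exists k, eval X f (m :: xs) (S k)) ->
    eval X (CMu f) xs n
with evals (X : oracle) : list code -> list nat -> list nat -> Prop :=
| evs_nil xs : evals X [] xs []
| evs_cons g gs xs y ys :
    eval X g xs y -> evals X gs xs ys -> evals X (g :: gs) xs (y :: ys).

Definition computable_in (X : oracle) (k : nat) (F : list nat -> nat) : Prop :=
  exists c : code, forall xs : list nat, length xs = k -> eval X c xs (F xs).

Definition Sigma02_rel (X : oracle) (R : nat -> nat -> Prop) : Prop :=
  exists r : list nat -> nat, computable_in X 4 r /\
    forall n m, R n m <-> exists a, forall b, r [n; m; a; b] = 0.

Definition Pi02_rel (X : oracle) (R : nat -> nat -> Prop) : Prop :=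
  exists r : list nat -> nat, computable_in X 4 r /\
    forall n m, R n m <-> forall a, exists b, r [n; m; a; b] = 0.

Definition Delta02_fun (X : oracle) (f : nat -> nat) : Prop :=
  Sigma02_rel X (fun n m => f n = m) /\ Pi02_rel X (fun n m => f n = m).

(* A structure in the language {E}: universe A ⊆ omega (given by its
   characteristic function) and a binary relation E on omega
   (only its restriction to A matters). *)
Record structure : Type := Struct { univ : nat -> bool; rel : nat -> nat -> bool }.

Definition is_equivalence_structure (S : structure) : Prop :=
  (forall x, univ S x = true -> rel S x x = true) /\
  (forall x y, univ S x = true -> univ S y = true ->
     rel S x y = true -> rel S y x = true) /\
  (forall x y z, univ S x = true -> univ S y = true -> univ S z = true ->
     rel S x y = true -> rel S y z = true -> rel S x z = true).

Definition eq_class (S : structure) (x : nat) (y : nat) : Prop :=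
  univ S y = true /\ rel S x y = true.

Definition finite_set (P : nat -> Prop) : Prop :=
  exists l : list nat, forall y, P y -> In y l.

Definition bounded_character (S : structure) : Prop :=
  exists k : nat, forall x, univ S x = true -> finite_set (eq_class S x) ->
    forall l : list nat, NoDup l -> (forall y, In y l -> eq_class S x y) ->
      length l <= k.

(* infinitely many infinite classes: no finite list of elements meets
   every infinite class *)
Definition infinitely_many_infinite_classes (S : structure) : Prop :=
  ~ exists l : list nat, forall x, univ S x = true -> ~ finite_set (eq_class S x) ->
      exists y, In y l /\ univ S y = true /\ rel S x y = true.

(* D(S): 2x codes "x ∈ A", 2<x,y>+1 codes "x E y". *)
Definition diagram (S : structure) : oracle :=
  fun n => if Nat.even n then univ S (Nat.div2 n)
           else let '(x, y) := Cantor.of_nat (Nat.div2 n) in rel S x y.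

Definition join (X Y : oracle) : oracle :=
  fun n => if Nat.even n then X (Nat.div2 n) else Y (Nat.div2 n).

Definition is_embedding (S T : structure) (f : nat -> nat) : Prop :=
  (forall x, univ S x = true -> univ T (f x) = true) /\
  (forall x y, univ S x = true -> univ S y = true -> f x = f y -> x = y) /\
  (forall x y, univ S x = true -> univ S y = true ->
     rel S x y = rel T (f x) (f y)).

Definition is_isomorphism (S T : structure) (f : nat -> nat) : Prop :=
  is_embedding S T f /\
  (forall z, univ T z = true -> exists x, univ S x = true /\ f x = z).

Definition isomorphic (S T : structure) : Prop := exists f, is_isomorphism S T f.

Definition bi_embeddable (S T : structure) : Prop :=
  (exists f, is_embedding S T f) /\ (exists g, is_embedding T S g).

Definition rel_Delta02_categorical (S : structure) : Prop :=
  forall T : structure, isomorphic S T ->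
    exists f, is_isomorphism S T f /\
      Delta02_fun (join (diagram S) (diagram T)) f.

Definition rel_Delta02_biemb_categorical (S : structure) : Prop :=
  forall T : structure, bi_embeddable S T ->
    exists f g, is_embedding S T f /\ is_embedding T S g /\
      Delta02_fun (join (diagram S) (diagram T)) f /\
      Delta02_fun (join (diagram S) (diagram T)) g.

From Stdlib Require Import Arith List Cantor.
From Stdlib Require Import Lia Classical ClassicalEpsilon Bool.
Import ListNotations.

(* When finite classes have at most [k] elements, the size of a
   class capped at [k + 1] (its type) is the limit of computable approximations.
   An element is determined by its type, the rank of its class among the classes
   of that type ordered by least elements, and its position in its class; an
   isomorphic copy realizes the same triples, so matching triples is an
   isomorphism whose graph is a limit of computable relations, hence Delta^0_2.

   We build by finite extensions a structure [T] whose classes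
   are columns of omega, bi-embeddable with [M] through infinitely many infinite
   "protected" columns, and defeat the [n]-th candidate Sigma^0_2 graph of an
   embedding [f : M -> T].  At stage [2 n], if some extension forces the
   candidate to assert [f x = m] for [x] in an infinite class, the column of [m]
   is closed, so [f] would send an infinite class into a finite one.  Otherwise,
   by pigeonhole some infinite class is sent to an unprotected column; its true
   witness [a] is then not forced, and odd stages commit to a nonzero value of
   the matrix at [a], which persists in [T]. *)

Inductive expr : Type :=
| EVar (i : nat)
| ENum (n : nat)
| EAdd (a b : expr)
| ESub (a b : expr)
| EIsZero (a : expr)
| EIf (c t e : expr)
| EOracle (a : expr)
| ESum (bound body : expr).

Fixpoint sum_below (f : nat -> nat) (n : nat) : nat :=
  match n with 0 => 0 | S n => sum_below f n + f n end.

(* [ESum bound body] binds the summation index as variable 0 of [body]. *)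
Fixpoint eval_expr (X : oracle) (env : list nat) (e : expr) : nat :=
  match e with
  | EVar i => nth i env 0
  | ENum n => n
  | EAdd a b => eval_expr X env a + eval_expr X env b
  | ESub a b => eval_expr X env a - eval_expr X env b
  | EIsZero a => match eval_expr X env a with 0 => 1 | _ => 0 end
  | EIf c t e => match eval_expr X env c with 0 => eval_expr X env e | _ => eval_expr X env t end
  | EOracle a => if X (eval_expr X env a) then 1 else 0
  | ESum bnd body => sum_below (fun i => eval_expr X (i :: env) body) (eval_expr X env bnd)
  end.

Lemma sum_below_ext f g n : (forall i, f i = g i) -> sum_below f n = sum_below g n.
Proof. intros H; induction n; simpl; auto. Qed.

Lemma sum_below_ge f n i : i < n -> f i <= sum_below f n.
Proof.
  induction n as [|n IH]; intros H; [lia|]; simpl.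
  destruct (Nat.eq_dec i n); [subst; lia|]. specialize (IH ltac:(lia)); lia.
Qed.

Definition add_code : code := CPrec (CProj 0) (CComp CSucc [CProj 1]).
Definition pred_code : code := CPrec CZero (CProj 0).
Definition sub_code : code := CPrec (CProj 0) (CComp pred_code [CProj 1]).
Definition is_zero_code : code := CPrec (CComp CSucc [CZero]) CZero.
Definition const_code (k : nat) : code := Nat.iter k (fun c => CComp CSucc [c]) CZero.
Definition proj_codes (i n : nat) : list code := map CProj (seq i n).

(* Compiled code for an expression under [n] variables; [EIf] and [ESum] use
   primitive recursion on the condition/bound, carried in front of the
   environment. *)
Fixpoint compile (n : nat) (e : expr) : code :=
  match e with
  | EVar i => CProj i
  | ENum k => const_code k
  | EAdd a b => CComp add_code [compile n a; compile n b]
  | ESub a b => CComp sub_code [compile n b; compile n a]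
  | EIsZero a => CComp is_zero_code [compile n a]
  | EIf c t e =>
      CComp (CPrec (compile n e) (CComp (compile n t) (proj_codes 2 n)))
            (compile n c :: proj_codes 0 n)
  | EOracle a => CComp COracle [compile n a]
  | ESum bnd body =>
      CComp (CPrec CZero
               (CComp add_code [CProj 1; CComp (compile (S n) body) (CProj 0 :: proj_codes 2 n)]))
            (compile n bnd :: proj_codes 0 n)
  end.

Lemma evals_proj_codes X l pre :
  evals X (proj_codes (length pre) (length l)) (pre ++ l) l.
Proof.
  revert pre; induction l as [|a l IH]; intros pre; simpl; constructor.
  - replace a with (nth (length pre) (pre ++ a :: l) 0) at 2; [constructor|].
    rewrite app_nth2, Nat.sub_diag by lia. reflexivity.
  - specialize (IH (pre ++ [a])). rewrite <- app_assoc, length_app, Nat.add_1_r in IH. exact IH.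
Qed.

Lemma eval_add_code X a b : eval X add_code [a; b] (a + b).
Proof.
  induction a as [|a IH]; simpl.
  - apply ev_prec0. change b with (nth 0 [b] 0) at 2. constructor.
  - eapply ev_precS; [exact IH|].
    eapply ev_comp; [change (a + b) with (nth 1 [a; a + b; b] 0); repeat constructor|].
    constructor.
Qed.

Lemma eval_pred_code X a : eval X pred_code [a] (pred a).
Proof.
  induction a as [|a IH]; [apply ev_prec0; constructor|].
  eapply ev_precS; [exact IH|]. change a with (nth 0 [a; pred a] 0) at 2. constructor.
Qed.

Lemma eval_sub_code X a b : eval X sub_code [b; a] (a - b).
Proof.
  induction b as [|b IH]; simpl.
  - rewrite Nat.sub_0_r. apply ev_prec0. change a with (nth 0 [a] 0) at 2. constructor.
  - eapply ev_precS; [exact IH|]. replace (a - S b) with (pred (a - b)) by lia.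
    eapply ev_comp; [|apply eval_pred_code].
    change (a - b) with (nth 1 [b; a - b; a] 0). repeat constructor.
Qed.

Lemma eval_is_zero_code X a : eval X is_zero_code [a] (match a with 0 => 1 | _ => 0 end).
Proof.
  induction a as [|a IH].
  - apply ev_prec0. eapply ev_comp; repeat constructor.
  - eapply ev_precS; [exact IH|]. constructor.
Qed.

Lemma eval_const_code X env k : eval X (const_code k) env k.
Proof.
  induction k; simpl; [constructor|].
  eapply ev_comp; [constructor; [exact IHk|constructor]|]. constructor.
Qed.

Lemma eval_compile X e : forall env, eval X (compile (length env) e) env (eval_expr X env e).
Proof.
  induction e as [i|k|a IHa b IHb|a IHa b IHb|a IHa|c IHc t IHt e IHe|a IHa|bnd IHbnd body IHbody];
    intros env; simpl.
  - constructor.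
  - apply eval_const_code.
  - eapply ev_comp; [repeat constructor; auto|apply eval_add_code].
  - eapply ev_comp; [repeat constructor; auto|apply eval_sub_code].
  - eapply ev_comp; [repeat constructor; auto|apply eval_is_zero_code].
  - eapply ev_comp; [constructor; [apply IHc|apply (evals_proj_codes X env [])]|].
    assert (Hcase : forall m,
      eval X (CPrec (compile (length env) e)
                    (CComp (compile (length env) t) (proj_codes 2 (length env))))
        (m :: env) (match m with 0 => eval_expr X env e | _ => eval_expr X env t end)).
    { induction m; [apply ev_prec0, IHe|].
      eapply ev_precS; [exact IHm|]. eapply ev_comp; [apply (evals_proj_codes X env [_; _])|apply IHt]. }
    specialize (Hcase (eval_expr X env c)). destruct (eval_expr X env c); exact Hcase.
  - eapply ev_comp; [repeat constructor; auto|constructor].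
  - eapply ev_comp; [constructor; [apply IHbnd|apply (evals_proj_codes X env [])]|].
    generalize (eval_expr X env bnd) as m. induction m as [|m IHm]; simpl.
    + apply ev_prec0. constructor.
    + eapply ev_precS; [exact IHm|].
      set (z := sum_below (fun i => eval_expr X (i :: env) body) m).
      apply ev_comp with (ys := [z; eval_expr X (m :: env) body]); [|apply eval_add_code].
      constructor; [change z with (nth 1 (m :: z :: env) 0) at 2; constructor|].
      constructor; [|constructor].
      eapply ev_comp; [constructor; [constructor|apply (evals_proj_codes X env [_; _])]|].
      apply (IHbody (m :: env)).
Qed.

Lemma computable_in_expr X k e : computable_in X k (fun xs => eval_expr X xs e).
Proof. exists (compile k e). intros xs <-. apply eval_compile. Qed.

Section CodeInd.
Variable P : code -> Prop.
Hypotheses (HZero : P CZero) (HSucc : P CSucc) (HProj : forall i, P (CProj i))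
  (HOracle : P COracle) (HComp : forall f gs, P f -> Forall P gs -> P (CComp f gs))
  (HPrec : forall f g, P f -> P g -> P (CPrec f g)) (HMu : forall f, P f -> P (CMu f)).

Fixpoint code_ind_nested (c : code) : P c :=
  match c with
  | CZero => HZero | CSucc => HSucc | CProj i => HProj i | COracle => HOracle
  | CComp f gs => HComp f gs (code_ind_nested f)
      ((fix all (l : list code) : Forall P l :=
          match l with [] => Forall_nil P | g :: l => Forall_cons g (code_ind_nested g) (all l) end) gs)
  | CPrec f g => HPrec f g (code_ind_nested f) (code_ind_nested g)
  | CMu f => HMu f (code_ind_nested f)
  end.
End CodeInd.

Section EvalInversion.
Context {X : oracle}.

Lemma eval_CZero_inv {xs y} : eval X CZero xs y -> y = 0.
Proof. intros H; inversion H; auto. Qed.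
Lemma eval_CSucc_inv {xs y} : eval X CSucc xs y -> y = S (hd 0 xs).
Proof. intros H; inversion H; auto. Qed.
Lemma eval_CProj_inv {i xs y} : eval X (CProj i) xs y -> y = nth i xs 0.
Proof. intros H; inversion H; auto. Qed.
Lemma eval_COracle_inv {xs y} : eval X COracle xs y -> y = (if X (hd 0 xs) then 1 else 0).
Proof. intros H; inversion H; auto. Qed.
Lemma eval_CComp_inv {f gs xs y} :
  eval X (CComp f gs) xs y -> exists ys, evals X gs xs ys /\ eval X f ys y.
Proof. intros H; inversion H; subst; eauto. Qed.
Lemma eval_CPrec_nil {f g y} : ~ eval X (CPrec f g) [] y.
Proof. intros H; inversion H. Qed.
Lemma eval_CPrec0_inv {f g xs y} : eval X (CPrec f g) (0 :: xs) y -> eval X f xs y.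
Proof. intros H; inversion H; auto. Qed.
Lemma eval_CPrecS_inv {f g n xs y} : eval X (CPrec f g) (S n :: xs) y ->
  exists z, eval X (CPrec f g) (n :: xs) z /\ eval X g (n :: z :: xs) y.
Proof. intros H; inversion H; subst; eauto. Qed.
Lemma eval_CMu_inv {f xs n} : eval X (CMu f) xs n ->
  eval X f (n :: xs) 0 /\ (forall m, m < n -> exists k, eval X f (m :: xs) (S k)).
Proof. intros H; inversion H; subst; auto. Qed.
Lemma evals_nil_inv {xs ys} : evals X [] xs ys -> ys = [].
Proof. intros H; inversion H; auto. Qed.
Lemma evals_cons_inv {g gs xs ys} : evals X (g :: gs) xs ys ->
  exists y ys', ys = y :: ys' /\ eval X g xs y /\ evals X gs xs ys'.
Proof. intros H; inversion H; subst; eauto 6. Qed.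

Lemma eval_deterministic {c xs y y'} : eval X c xs y -> eval X c xs y' -> y = y'.
Proof.
  revert xs y y'.
  induction c as [| | i | | f gs IHf IHgs | f g IHf IHg | f IHf] using code_ind_nested;
    intros xs y y' Hy Hy'.
  - now rewrite (eval_CZero_inv Hy), (eval_CZero_inv Hy').
  - now rewrite (eval_CSucc_inv Hy), (eval_CSucc_inv Hy').
  - now rewrite (eval_CProj_inv Hy), (eval_CProj_inv Hy').
  - now rewrite (eval_COracle_inv Hy), (eval_COracle_inv Hy').
  - destruct (eval_CComp_inv Hy) as [ys [A B]], (eval_CComp_inv Hy') as [ys' [A' B']].
    enough (ys = ys') by (subst; eauto).
    clear - IHgs A A'. revert ys ys' A A'.
    induction IHgs as [|g gs IHg _ IH]; intros ys ys' A A'.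
    + now rewrite (evals_nil_inv A), (evals_nil_inv A').
    + destruct (evals_cons_inv A) as [y1 [l1 [-> [F1 G1]]]].
      destruct (evals_cons_inv A') as [y2 [l2 [-> [F2 G2]]]]. f_equal; eauto.
  - destruct xs as [|n xs]; [now apply eval_CPrec_nil in Hy|].
    revert y y' Hy Hy'. induction n as [|n IHn]; intros y y' Hy Hy'.
    + apply eval_CPrec0_inv in Hy, Hy'. eauto.
    + destruct (eval_CPrecS_inv Hy) as [z [A B]], (eval_CPrecS_inv Hy') as [z' [A' B']].
      assert (z = z') by eauto. subst. eauto.
  - destruct (eval_CMu_inv Hy) as [A B], (eval_CMu_inv Hy') as [A' B'].
    destruct (lt_eq_lt_dec y y') as [[Hl|He]|Hl]; auto.
    + destruct (B' y Hl) as [k Hk]. specialize (IHf _ _ _ A Hk). discriminate.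
    + destruct (B y' Hl) as [k Hk]. specialize (IHf _ _ _ A' Hk). discriminate.
Qed.
End EvalInversion.

Definition agree_on (X Y : oracle) (U : list nat) : Prop := forall u, In u U -> Y u = X u.

Lemma agree_on_app X Y U V : agree_on X Y (U ++ V) -> agree_on X Y U /\ agree_on X Y V.
Proof. unfold agree_on; split; intros; apply H; apply in_or_app; auto. Qed.

Lemma eval_finite_use {X c xs y} : eval X c xs y ->
  exists U, forall Y, agree_on X Y U -> eval Y c xs y.
Proof.
  revert xs y.
  induction c as [| | i | | f gs IHf IHgs | f g IHf IHg | f IHf] using code_ind_nested;
    intros xs y Hy.
  - rewrite (eval_CZero_inv Hy). exists []. constructor.
  - rewrite (eval_CSucc_inv Hy). exists []. constructor.
  - rewrite (eval_CProj_inv Hy). exists []. constructor.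
  - rewrite (eval_COracle_inv Hy). exists [hd 0 xs]. intros Y HY.
    rewrite <- (HY (hd 0 xs)) by now left. constructor.
  - destruct (eval_CComp_inv Hy) as [ys [A B]].
    assert (HU : exists U, forall Y, agree_on X Y U -> evals Y gs xs ys).
    { clear - IHgs A. revert ys A. induction IHgs as [|g gs IHg _ IH]; intros ys A.
      - rewrite (evals_nil_inv A). exists []. constructor.
      - destruct (evals_cons_inv A) as [y1 [l1 [-> [F1 G1]]]].
        destruct (IHg _ _ F1) as [U1 HU1], (IH _ G1) as [U2 HU2].
        exists (U1 ++ U2). intros Y HY. apply agree_on_app in HY. constructor; intuition. }
    destruct HU as [U1 HU1], (IHf _ _ B) as [U2 HU2].
    exists (U1 ++ U2). intros Y HY. apply agree_on_app in HY. econstructor; intuition.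
  - destruct xs as [|n xs]; [now apply eval_CPrec_nil in Hy|].
    revert y Hy. induction n as [|n IHn]; intros y Hy.
    + apply eval_CPrec0_inv in Hy. destruct (IHf _ _ Hy) as [U HU].
      exists U. intros Y HY. constructor; auto.
    + destruct (eval_CPrecS_inv Hy) as [z [A B]].
      destruct (IHn _ A) as [U1 HU1], (IHg _ _ B) as [U2 HU2].
      exists (U1 ++ U2). intros Y HY. apply agree_on_app in HY. econstructor; intuition.
  - destruct (eval_CMu_inv Hy) as [A B]. destruct (IHf _ _ A) as [U1 HU1].
    assert (HU : forall n, n <= y -> exists U, forall Y, agree_on X Y U ->
              forall m, m < n -> exists k, eval Y f (m :: xs) (S k)).
    { induction n as [|n IHn]; intros Hn.
      - exists []. intros; lia.
      - destruct IHn as [U2 HU2]; [lia|]. destruct (B n) as [k Hk]; [lia|].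
        destruct (IHf _ _ Hk) as [U3 HU3]. exists (U2 ++ U3). intros Y HY m Hm.
        apply agree_on_app in HY. destruct (Nat.eq_dec m n) as [->|].
        + exists k. intuition.
        + apply HU2; intuition; lia. }
    destruct (HU y (le_n _)) as [U2 HU2]. exists (U1 ++ U2). intros Y HY.
    apply agree_on_app in HY. constructor; intuition.
Qed.

Fixpoint codes_to_nat (enc : code -> nat) (l : list code) : nat :=
  match l with [] => 0 | g :: l => S (to_nat (enc g, codes_to_nat enc l)) end.

Fixpoint code_to_nat (c : code) : nat :=
  match c with
  | CZero => to_nat (0, 0)
  | CSucc => to_nat (1, 0)
  | CProj i => to_nat (2, i)
  | COracle => to_nat (3, 0)
  | CComp f gs => to_nat (4, to_nat (code_to_nat f, codes_to_nat code_to_nat gs))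
  | CPrec f g => to_nat (5, to_nat (code_to_nat f, code_to_nat g))
  | CMu f => to_nat (6, code_to_nat f)
  end.

Lemma code_to_nat_inj c : forall c', code_to_nat c = code_to_nat c' -> c = c'.
Proof.
  induction c as [| | i | | f gs IHf IHgs | f g IHf IHg | f IHf] using code_ind_nested;
    intros c' E; destruct c'; cbn [code_to_nat] in E;
    apply to_nat_inj, pair_equal_spec in E; destruct E as [E0 E]; try discriminate; auto.
  - apply to_nat_inj, pair_equal_spec in E. destruct E as [E1 E2]. f_equal; auto.
    clear - IHgs E2. revert l E2.
    induction IHgs as [|g gs IHg _ IH]; intros [|g' gs'] E; try discriminate; auto.
    apply Nat.succ_inj, to_nat_inj, pair_equal_spec in E. destruct E. f_equal; auto.
  - apply to_nat_inj, pair_equal_spec in E. destruct E. f_equal; auto.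
  - f_equal; auto.
Qed.

Definition nat_to_code (n : nat) : code :=
  epsilon (inhabits CZero) (fun c => code_to_nat c = n).

Lemma code_to_natK c : nat_to_code (code_to_nat c) = c.
Proof.
  apply code_to_nat_inj, (epsilon_spec (inhabits CZero) (fun c' => code_to_nat c' = code_to_nat c)).
  now exists c.
Qed.

Lemma in_le_list_max l y : In y l -> y <= list_max l.
Proof.
  intros H. assert (A := proj1 (list_max_le l (list_max l)) (le_n _)).
  rewrite Forall_forall in A. auto.
Qed.

Definition count (p : nat -> bool) (N : nat) : nat :=
  sum_below (fun w => if p w then 1 else 0) N.

Lemma count_S p N : count p (S N) = count p N + (if p N then 1 else 0).
Proof. reflexivity. Qed.

Lemma count_le p N : count p N <= N.
Proof. induction N; [apply le_n|]. rewrite count_S. destruct (p N); lia. Qed.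

Lemma count_monotone p a b : a <= b -> count p a <= count p b.
Proof. induction 1; auto. rewrite count_S. lia. Qed.

Lemma count_lt p w w' : p w = true -> w < w' -> count p w < count p w'.
Proof.
  intros H L. apply Nat.lt_le_trans with (count p (S w)).
  - rewrite count_S, H. lia.
  - now apply count_monotone.
Qed.

Lemma count_inj p w w' : p w = true -> p w' = true -> count p w = count p w' -> w = w'.
Proof.
  intros H H' E. destruct (lt_eq_lt_dec w w') as [[L|L]|L]; auto.
  - pose proof (count_lt p w w' H L). lia.
  - pose proof (count_lt p w' w H' L). lia.
Qed.

Lemma count_filter p N : count p N = length (filter p (seq 0 N)).
Proof.
  induction N; auto. rewrite count_S, seq_S, filter_app, length_app, IHN. simpl.
  destruct (p N); simpl; lia.
Qed.

Lemma count_ext p q N : (forall w, w < N -> p w = q w) -> count p N = count q N.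
Proof. induction N; intros H; auto. rewrite !count_S, IHN, H; auto. Qed.

Lemma count_all (q : nat -> bool) M : (forall w, w < M -> q w = true) -> count q M = M.
Proof. induction M; intros H; auto. rewrite count_S, IHM, H; auto. lia. Qed.

Lemma NoDup_length_le_count p N l :
  NoDup l -> (forall w, In w l -> p w = true /\ w < N) -> length l <= count p N.
Proof.
  intros D H. rewrite count_filter. apply NoDup_incl_length; auto.
  intros w Hw. apply filter_In. destruct (H w Hw). split; auto. apply in_seq. lia.
Qed.

Lemma count_attained p N r : r < count p N -> exists w, w < N /\ p w = true /\ count p w = r.
Proof.
  induction N; intros H; [unfold count in H; simpl in H; lia|].
  rewrite count_S in H. destruct (lt_dec r (count p N)) as [L|L].
  - destruct (IHN L) as [w [A [B C]]]. exists w; repeat split; auto.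
  - destruct (p N) eqn:E; [|lia]. exists N. repeat split; auto. lia.
Qed.

Lemma count_value_iff p r : (exists w, p w = true /\ count p w = r) <->
  (exists l, NoDup l /\ length l = S r /\ forall w, In w l -> p w = true).
Proof.
  split.
  - intros [w [H E]]. exists (filter p (seq 0 (S w))). repeat split.
    + apply NoDup_filter, seq_NoDup.
    + rewrite <- count_filter, count_S, H, E. lia.
    + intros v Hv. apply filter_In in Hv. tauto.
  - intros [l [D [L H]]].
    assert (A : length l <= count p (S (list_max l))).
    { apply NoDup_length_le_count; auto. intros w Hw. split; auto.
      apply in_le_list_max in Hw. lia. }
    destruct (count_attained p (S (list_max l)) r) as [w [_ [B C]]]; [lia|eauto].
Qed.

Lemma count_downward_closed (q : nat -> bool) N :
  (forall w, q (S w) = true -> q w = true) -> q N = false ->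
  exists mu, q mu = false /\ (forall w, w < mu -> q w = true) /\ count q N = mu.
Proof.
  intros Down. induction N as [|N IH]; intros H.
  - exists 0. repeat split; auto. intros; lia.
  - destruct (q N) eqn:E.
    + assert (Below : forall d, q (N - d) = true).
      { induction d as [|d IHd]; [now rewrite Nat.sub_0_r|].
        destruct (le_lt_dec N d); [now replace (N - S d) with (N - d) by lia|].
        apply Down. now replace (S (N - S d)) with (N - d) by lia. }
      assert (Hlt : forall w, w < S N -> q w = true)
        by (intros w Hw; replace w with (N - (N - w)) by lia; apply Below).
      exists (S N). repeat split; auto. now apply count_all.
    + destruct (IH eq_refl) as [mu [B [C D]]]. exists mu. repeat split; auto.
      rewrite count_S, D, E. lia.
Qed.

Definition in_class (U : structure) (x w : nat) : bool := univ U w && rel U x w.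
Definition class_count (U : structure) (x b : nat) : nat := count (in_class U x) b.
Definition capped_count (U : structure) (k x b : nat) : nat :=
  if class_count U x b <=? k then class_count U x b else S k.
(* The number of [w < x] such that no element of the class of [x] is [<= w],
   i.e. the least element of that class. *)
Definition least_elt (U : structure) (x : nat) : nat :=
  count (fun w => class_count U x (S w) =? 0) x.
Definition is_least (U : structure) (w : nat) : bool := univ U w && (least_elt U w =? w).
Definition class_pos (U : structure) (x : nat) : nat := class_count U x x.
Definition has_elts (U : structure) (x j : nat) : Prop :=
  exists l, NoDup l /\ length l = j /\ forall w, In w l -> in_class U x w = true.

Lemma in_classP {U x w} : in_class U x w = true -> univ U w = true /\ rel U x w = true.
Proof. apply andb_prop. Qed.

Lemma least_elt_le U x : least_elt U x <= x.
Proof. apply count_le. Qed.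

Lemma capped_count_monotone U k x b b' : b <= b' -> capped_count U k x b <= capped_count U k x b'.
Proof.
  intros L. pose proof (count_monotone (in_class U x) b b' L). unfold capped_count, class_count in *.
  destruct (Nat.leb_spec (count (in_class U x) b) k), (Nat.leb_spec (count (in_class U x) b') k); lia.
Qed.

Lemma capped_count_le U k x b : capped_count U k x b <= S k.
Proof. unfold capped_count. destruct (Nat.leb_spec (class_count U x b) k); lia. Qed.

Lemma has_elts_le U x j j' : j' <= j -> has_elts U x j -> has_elts U x j'.
Proof.
  intros L [l [D [E H]]]. exists (firstn j' l). rewrite <- (firstn_skipn j' l) in D, H.
  repeat split.
  - eapply NoDup_app_remove_r; eauto.
  - rewrite length_firstn. lia.
  - intros w Hw. apply H, in_or_app. auto.
Qed.

Lemma monotone_bounded_stabilizes (g : nat -> nat) K :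
  (forall b b', b <= b' -> g b <= g b') -> (forall b, g b <= K) ->
  exists b0, forall b, b0 <= b -> g b = g b0.
Proof.
  intros M B.
  assert (G : forall d s, K - g s <= d -> exists b0, forall b, b0 <= b -> g b = g b0).
  { induction d as [|d IH]; intros s Hs.
    - exists s. intros b Hb. pose proof (M _ _ Hb). pose proof (B b). lia.
    - destruct (classic (exists b, s <= b /\ g b <> g s)) as [[b [Hb1 Hb2]]|N].
      + apply (IH b). pose proof (M _ _ Hb1). pose proof (B b). lia.
      + exists s. intros b Hb. destruct (Nat.eq_dec (g b) (g s)); auto. exfalso; eauto. }
  apply (G K 0). lia.
Qed.

(* The type of [x] is the size of its class, capped at [k + 1]; it is the limit
   of the computable [capped_count U k x b] as [b] grows. *)
Definition type_stage (U : structure) (k x : nat) : nat :=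
  epsilon (inhabits 0) (fun b0 => forall b, b0 <= b -> capped_count U k x b = capped_count U k x b0).
Definition class_type (U : structure) (k x : nat) : nat := capped_count U k x (type_stage U k x).

Lemma class_type_spec U k x b : type_stage U k x <= b -> capped_count U k x b = class_type U k x.
Proof.
  apply (epsilon_spec (inhabits 0)
    (fun b0 => forall b, b0 <= b -> capped_count U k x b = capped_count U k x b0)).
  apply (monotone_bounded_stabilizes _ (S k)); [apply capped_count_monotone|apply capped_count_le].
Qed.

Lemma class_type_le U k x : class_type U k x <= S k.
Proof. apply capped_count_le. Qed.

Lemma class_type_has_elts U k x j : j <= S k -> (j <= class_type U k x <-> has_elts U x j).
Proof.
  intros J. split.
  - unfold class_type. set (b0 := type_stage U k x). intros H.
    apply (has_elts_le U x (class_count U x b0)).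
    { unfold capped_count in H. destruct (Nat.leb_spec (class_count U x b0) k); lia. }
    exists (filter (in_class U x) (seq 0 b0)). repeat split.
    + apply NoDup_filter, seq_NoDup.
    + unfold class_count. now rewrite count_filter.
    + intros w Hw. apply filter_In in Hw. tauto.
  - intros [l [D [E H]]]. set (b := S (list_max l) + type_stage U k x).
    rewrite <- (class_type_spec U k x b) by (unfold b; lia).
    assert (C : length l <= class_count U x b).
    { apply NoDup_length_le_count; auto. intros w Hw. split; auto.
      apply in_le_list_max in Hw. unfold b. lia. }
    unfold capped_count. destruct (Nat.leb_spec (class_count U x b) k); lia.
Qed.

Definition large_classes_infinite (U : structure) (k : nat) : Prop :=
  forall x, univ U x = true -> has_elts U x (S k) -> forall n, has_elts U x n.

Lemma has_elts_iff_type U k w p : large_classes_infinite U k -> univ U w = true ->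
  (has_elts U w (S p) <-> (class_type U k w <= k -> S p <= class_type U k w)).
Proof.
  intros B Hw. pose proof (class_type_le U k w) as Le. split.
  - intros H L. destruct (le_lt_dec (S p) (S k)).
    + apply class_type_has_elts; auto.
    + assert (Hk : has_elts U w (S k)) by (apply (has_elts_le U w (S p)); auto; lia).
      apply (class_type_has_elts U k w (S k)) in Hk; lia.
  - intros H'. destruct (le_lt_dec (class_type U k w) k).
    + apply (class_type_has_elts U k w); lia.
    + apply B; auto. apply (class_type_has_elts U k w); lia.
Qed.

Section ClassLemmas.
Context {U : structure}.
Hypothesis EQ : is_equivalence_structure U.

Lemma in_class_refl {x} : univ U x = true -> in_class U x x = true.
Proof. destruct EQ as [R _]. intros H. unfold in_class. rewrite H, R; auto. Qed.

Lemma in_class_ext {x y} : univ U x = true -> univ U y = true -> rel U x y = true ->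
  forall w, in_class U x w = in_class U y w.
Proof.
  destruct EQ as [R [Sy Tr]]. intros Hx Hy Hxy w. unfold in_class.
  destruct (univ U w) eqn:Hw; auto; simpl.
  destruct (rel U x w) eqn:E1, (rel U y w) eqn:E2; auto.
  - rewrite <- E2. symmetry. apply (Tr y x w); auto.
  - rewrite <- E1. apply (Tr x y w); auto.
Qed.

Lemma least_elt_spec {x} : univ U x = true ->
  in_class U x (least_elt U x) = true /\ forall w, w < least_elt U x -> in_class U x w = false.
Proof.
  intros Hx.
  destruct (count_downward_closed (fun w => class_count U x (S w) =? 0) x) as [mu [A [B C]]].
  - intros w H. apply Nat.eqb_eq in H. apply Nat.eqb_eq. unfold class_count in *.
    pose proof (count_monotone (in_class U x) (S w) (S (S w))). lia.
  - apply Nat.eqb_neq. unfold class_count. rewrite count_S, in_class_refl; auto. lia.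
  - unfold least_elt. rewrite C.
    assert (Z : class_count U x mu = 0).
    { destruct mu; [reflexivity|]. apply Nat.eqb_eq, (B mu). lia. }
    apply Nat.eqb_neq in A. unfold class_count in A, Z. rewrite count_S, Z in A. split.
    + destruct (in_class U x mu); auto; lia.
    + intros w Hw. destruct (in_class U x w) eqn:E; auto.
      pose proof (count_lt (in_class U x) w mu E Hw). lia.
Qed.

Lemma least_elt_ext {x y} : univ U x = true -> univ U y = true -> rel U x y = true ->
  least_elt U x = least_elt U y.
Proof.
  intros Hx Hy Hxy. pose proof (in_class_ext Hx Hy Hxy) as Ext.
  destruct (least_elt_spec Hx) as [A A'], (least_elt_spec Hy) as [B B'].
  destruct (lt_eq_lt_dec (least_elt U x) (least_elt U y)) as [[L|L]|L]; auto.
  - pose proof (B' _ L) as F. rewrite <- Ext, A in F. discriminate.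
  - pose proof (A' _ L) as F. rewrite Ext, B in F. discriminate.
Qed.

Lemma least_elt_in {x} : univ U x = true ->
  univ U (least_elt U x) = true /\ rel U x (least_elt U x) = true.
Proof. intros Hx. apply in_classP, (least_elt_spec Hx). Qed.

Lemma least_elt_idem {x} : univ U x = true -> least_elt U (least_elt U x) = least_elt U x.
Proof. intros Hx. destruct (least_elt_in Hx). symmetry. apply least_elt_ext; auto. Qed.

Lemma rel_of_least_elt_eq {x y} : univ U x = true -> univ U y = true ->
  least_elt U x = least_elt U y -> rel U x y = true.
Proof.
  intros Hx Hy E. destruct (least_elt_in Hx) as [A B], (least_elt_in Hy) as [C D].
  destruct EQ as [R [Sy Tr]]. rewrite <- E in *. apply (Tr x (least_elt U x) y); auto.
Qed.

Lemma class_count_ext {x y} b : univ U x = true -> univ U y = true -> rel U x y = true ->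
  class_count U x b = class_count U y b.
Proof. intros. apply count_ext. intros. apply in_class_ext; auto. Qed.

Lemma class_type_ext k {x y} : univ U x = true -> univ U y = true -> rel U x y = true ->
  class_type U k x = class_type U k y.
Proof.
  intros Hx Hy Hxy. set (b := type_stage U k x + type_stage U k y).
  rewrite <- (class_type_spec U k x b), <- (class_type_spec U k y b) by (unfold b; lia).
  unfold capped_count. now rewrite (class_count_ext b Hx Hy Hxy).
Qed.

Lemma class_type_least_elt k {x} : univ U x = true -> class_type U k (least_elt U x) = class_type U k x.
Proof. intros Hx. destruct (least_elt_in Hx). symmetry. apply class_type_ext; auto. Qed.

End ClassLemmas.

(* Classes of each type are numbered by the order of their least elements;
   (type, rank, position in the class) is then a complete invariant of an element. *)
Definition least_of_type (U : structure) (k j w : nat) : bool :=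
  is_least U w && (class_type U k w =? j).
Definition class_rank (U : structure) (k x : nat) : nat :=
  count (least_of_type U k (class_type U k x)) (least_elt U x).

Definition realized (U : structure) (k j r p : nat) : Prop :=
  exists x, univ U x = true /\ class_type U k x = j /\ class_rank U k x = r /\ class_pos U x = p.

(* Unlike [realized], this only counts classes of a given type, so it transfers
   along isomorphisms. *)
Definition realizable (U : structure) (k j r p : nat) : Prop :=
  (exists l, NoDup l /\ length l = S r /\ forall w, In w l -> least_of_type U k j w = true) /\
  (j <= k -> S p <= j).

Section Invariants.
Context {U : structure}.
Variable k : nat.
Hypothesis EQ : is_equivalence_structure U.

Lemma least_of_type_least_elt {x} : univ U x = true ->
  least_of_type U k (class_type U k x) (least_elt U x) = true.
Proof.
  intros Hx. unfold least_of_type, is_least. destruct (least_elt_in EQ Hx) as [H _].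
  now rewrite H, least_elt_idem, class_type_least_elt, !Nat.eqb_refl.
Qed.

Lemma least_elt_eq_of_rank {x y} : univ U x = true -> univ U y = true ->
  class_type U k x = class_type U k y -> class_rank U k x = class_rank U k y ->
  least_elt U x = least_elt U y.
Proof.
  intros Hx Hy Et Er. unfold class_rank in Er. rewrite Et in Er.
  apply (count_inj (least_of_type U k (class_type U k y))); auto.
  - rewrite <- Et at 1. now apply least_of_type_least_elt.
  - now apply least_of_type_least_elt.
Qed.

Lemma rel_iff_invariants {x y} : univ U x = true -> univ U y = true ->
  (rel U x y = true <-> class_type U k x = class_type U k y /\ class_rank U k x = class_rank U k y).
Proof.
  intros Hx Hy. split.
  - intros R. assert (Et : class_type U k x = class_type U k y) by (apply class_type_ext; auto).
    split; auto. unfold class_rank. now rewrite Et, (least_elt_ext EQ Hx Hy R).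
  - intros [Et Er]. apply (rel_of_least_elt_eq EQ Hx Hy), least_elt_eq_of_rank; auto.
Qed.

Lemma invariants_inj {x y} : univ U x = true -> univ U y = true ->
  class_type U k x = class_type U k y -> class_rank U k x = class_rank U k y ->
  class_pos U x = class_pos U y -> x = y.
Proof.
  intros Hx Hy Et Er Ep.
  assert (R : rel U x y = true) by (apply rel_iff_invariants; auto).
  unfold class_pos, class_count in Ep.
  rewrite (count_ext (in_class U y) (in_class U x) y) in Ep
    by (intros; symmetry; apply in_class_ext; auto).
  apply (count_inj (in_class U x)); auto.
  - now apply in_class_refl.
  - unfold in_class. now rewrite Hy, R.
Qed.

Lemma realized_iff j r p : large_classes_infinite U k ->
  (realized U k j r p <-> realizable U k j r p).
Proof.
  intros B. split.
  - intros [x [Hx [<- [<- <-]]]]. split.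
    + apply count_value_iff. exists (least_elt U x).
      split; [now apply least_of_type_least_elt|reflexivity].
    + apply (has_elts_iff_type U k x _ B Hx), count_value_iff.
      exists x. split; [now apply in_class_refl|reflexivity].
  - intros [Hl Hp]. apply count_value_iff in Hl. destruct Hl as [w [Pw Cw]].
    unfold least_of_type, is_least in Pw. apply andb_prop in Pw. destruct Pw as [Pw Tw].
    apply andb_prop in Pw. destruct Pw as [Uw Lw]. apply Nat.eqb_eq in Tw, Lw.
    assert (Hw : has_elts U w (S p)) by (apply (has_elts_iff_type U k w p B Uw); rewrite Tw; auto).
    apply count_value_iff in Hw. destruct Hw as [x [Ix Cx]]. destruct (in_classP Ix) as [Ux Rx].
    exists x. split; auto.
    assert (Tx : class_type U k x = j) by (rewrite <- Tw; symmetry; apply class_type_ext; auto).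
    assert (Lx : least_elt U x = w) by (rewrite <- Lw; symmetry; apply least_elt_ext; auto).
    repeat split; auto.
    + unfold class_rank. now rewrite Tx, Lx.
    + unfold class_pos, class_count. rewrite <- Cx. apply count_ext.
      intros v _. symmetry. apply in_class_ext; auto.
Qed.

End Invariants.

Lemma large_classes_infinite_of_bound U k : is_equivalence_structure U ->
  (forall x, univ U x = true -> finite_set (eq_class U x) ->
     forall l, NoDup l -> (forall y, In y l -> eq_class U x y) -> length l <= k) ->
  large_classes_infinite U k.
Proof.
  intros EQ B x Hx [l0 [D0 [L0 H0]]].
  assert (NF : ~ finite_set (eq_class U x)).
  { intros F. enough (length l0 <= k) by lia.
    apply (B x Hx F l0 D0). intros y Hy. destruct (in_classP (H0 y Hy)). split; auto. }
  induction n as [|n [l [D [L H]]]].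
  - exists []. repeat split; auto. constructor.
  - destruct (classic (exists y, eq_class U x y /\ ~ In y l)) as [[y [[Uy Ry] Hn]]|N].
    + exists (y :: l). repeat split; [constructor; auto|simpl; auto|].
      intros w [<-|Hw]; auto. unfold in_class. now rewrite Uy, Ry.
    + exfalso. apply NF. exists l. intros y Hy. apply NNPP. intros Ny. eauto.
Qed.

Section Isomorphism.
Context {U V : structure} {h : nat -> nat}.
Hypothesis I : is_isomorphism U V h.

Lemma isomorphism_inverse : exists g, is_isomorphism V U g /\
  (forall x, univ U x = true -> g (h x) = x) /\ (forall y, univ V y = true -> h (g y) = y).
Proof.
  destruct I as [[Hu [Hi Hr]] Hs].
  set (g := fun y => epsilon (inhabits 0) (fun x => univ U x = true /\ h x = y)).
  assert (G : forall y, univ V y = true -> univ U (g y) = true /\ h (g y) = y)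
    by (intros y Hy; apply (epsilon_spec (inhabits 0) (fun x => univ U x = true /\ h x = y)); auto).
  exists g. split; [split; [split; [|split]|]|split].
  - intros y Hy. apply G; auto.
  - intros y y' Hy Hy' E. rewrite <- (proj2 (G y Hy)), <- (proj2 (G y' Hy')), E. auto.
  - intros y y' Hy Hy'. rewrite <- (proj2 (G y Hy)) at 1. rewrite <- (proj2 (G y' Hy')) at 1.
    symmetry. apply Hr; apply G; auto.
  - intros x Hx. exists (h x). split; auto. apply Hi; auto; apply G; auto.
  - intros x Hx. apply Hi; auto; apply G; auto.
  - intros y Hy. apply G; auto.
Qed.

Lemma isomorphism_equivalence : is_equivalence_structure U -> is_equivalence_structure V.
Proof.
  destruct I as [[Hu [Hi Hr]] Hs]. intros [R [Sy Tr]]. split; [|split].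
  - intros y Hy. destruct (Hs y Hy) as [x [Hx <-]]. rewrite <- Hr; auto.
  - intros y y' Hy Hy' E. destruct (Hs y Hy) as [x [Hx <-]], (Hs y' Hy') as [x' [Hx' <-]].
    rewrite <- Hr in *; auto.
  - intros y y' y'' Hy Hy' Hy'' E E'.
    destruct (Hs y Hy) as [x [Hx <-]], (Hs y' Hy') as [x' [Hx' <-]], (Hs y'' Hy'') as [x'' [Hx'' <-]].
    rewrite <- Hr in *; eauto.
Qed.

Lemma isomorphism_has_elts x j : univ U x = true -> has_elts U x j -> has_elts V (h x) j.
Proof.
  destruct I as [[Hu [Hi Hr]] Hs]. intros Hx [l [D [L H]]]. exists (map h l). repeat split.
  - apply NoDup_map_NoDup_ForallPairs; auto. intros a b Ha Hb E.
    apply Hi; auto; [apply (in_classP (H _ Ha))|apply (in_classP (H _ Hb))].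
  - now rewrite length_map.
  - intros w' Hw'. apply in_map_iff in Hw'. destruct Hw' as [w [<- Hw]].
    destruct (in_classP (H w Hw)) as [A B]. unfold in_class. rewrite Hu, <- Hr; auto.
Qed.

End Isomorphism.

Lemma isomorphism_class_type {U V h g} k {x} : is_isomorphism U V h -> is_isomorphism V U g ->
  (forall x, univ U x = true -> g (h x) = x) -> univ U x = true ->
  class_type V k (h x) = class_type U k x.
Proof.
  intros I J GH Hx. pose proof (class_type_le V k (h x)). pose proof (class_type_le U k x).
  assert (Iff : forall j, j <= S k -> (j <= class_type V k (h x) <-> j <= class_type U k x)).
  { intros j Hj. rewrite !class_type_has_elts by auto. split; intros A.
    - rewrite <- (GH x Hx). apply (isomorphism_has_elts J); auto. apply I; auto.
    - apply (isomorphism_has_elts I); auto. }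
  pose proof (Iff _ H). pose proof (Iff _ H0). lia.
Qed.

Lemma large_classes_infinite_iso {U V h g k} : large_classes_infinite U k ->
  is_isomorphism U V h -> is_isomorphism V U g ->
  (forall y, univ V y = true -> h (g y) = y) -> large_classes_infinite V k.
Proof.
  intros B I J HG y Hy H n. assert (Ugy : univ U (g y) = true) by (apply J; auto).
  rewrite <- (HG y Hy). apply (isomorphism_has_elts I); auto.
  apply B; auto. apply (isomorphism_has_elts J); auto.
Qed.

Lemma realizable_iso {U V h g k j r p} : is_equivalence_structure U -> is_isomorphism U V h ->
  is_isomorphism V U g -> (forall x, univ U x = true -> g (h x) = x) ->
  realizable U k j r p -> realizable V k j r p.
Proof.
  intros EQ I J GH [[l [D [L H]]] Hp]. split; auto.
  pose proof (isomorphism_equivalence I EQ) as EQV. pose proof I as [[Hu [Hi Hr]] Hs].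
  assert (PW : forall w, In w l -> univ U w = true /\ least_elt U w = w /\ class_type U k w = j).
  { intros w Hw. specialize (H w Hw). unfold least_of_type, is_least in H.
    apply andb_prop in H. destruct H as [H1 H2]. apply andb_prop in H1. destruct H1 as [H1 H3].
    apply Nat.eqb_eq in H2, H3. auto. }
  exists (map (fun w => least_elt V (h w)) l). repeat split.
  - apply NoDup_map_NoDup_ForallPairs; auto. intros a b Ha Hb E.
    destruct (PW a Ha) as [Ua [La _]], (PW b Hb) as [Ub [Lb _]].
    rewrite <- La, <- Lb. apply (least_elt_ext EQ); auto.
    rewrite Hr; auto. apply (rel_of_least_elt_eq EQV); auto.
  - now rewrite length_map.
  - intros w' Hw'. apply in_map_iff in Hw'. destruct Hw' as [w [<- Hw]].
    destruct (PW w Hw) as [Uw [Lw Tw]].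
    replace j with (class_type V k (h w)) by now rewrite (isomorphism_class_type k I J GH Uw).
    apply (least_of_type_least_elt k EQV). auto.
Qed.

Section CanonicalIsomorphism.
Variables (U V : structure) (h : nat -> nat) (k : nat).
Hypotheses (EQS : is_equivalence_structure U) (BS : large_classes_infinite U k)
  (I : is_isomorphism U V h).

Lemma inverse_isomorphism_data : exists g, is_isomorphism V U g /\
  (forall x, univ U x = true -> g (h x) = x) /\ (forall y, univ V y = true -> h (g y) = y) /\
  is_equivalence_structure V /\ large_classes_infinite V k.
Proof.
  destruct (isomorphism_inverse I) as [g [J [GH HG]]]. exists g.
  exact (conj J (conj GH (conj HG
    (conj (isomorphism_equivalence I EQS) (large_classes_infinite_iso BS I J HG))))).
Qed.

Lemma realized_transfer j r p : realized U k j r p <-> realized V k j r p.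
Proof.
  destruct inverse_isomorphism_data as [g [J [GH [HG [EQT BT]]]]].
  rewrite (realized_iff k EQS j r p BS), (realized_iff k EQT j r p BT). split.
  - exact (realizable_iso EQS I J GH).
  - exact (realizable_iso EQT J I HG).
Qed.

(* The value [0] off the universe makes the graph of the map decidable from
   that of the invariants. *)
Definition canonical_iso (n : nat) : nat :=
  if univ U n then
    epsilon (inhabits 0) (fun m => univ V m = true /\ class_type V k m = class_type U k n /\
      class_rank V k m = class_rank U k n /\ class_pos V m = class_pos U n)
  else 0.

Lemma canonical_iso_spec n : univ U n = true ->
  univ V (canonical_iso n) = true /\ class_type V k (canonical_iso n) = class_type U k n /\
  class_rank V k (canonical_iso n) = class_rank U k n /\ class_pos V (canonical_iso n) = class_pos U n.
Proof.
  intros Hn. unfold canonical_iso. rewrite Hn.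
  apply (epsilon_spec (inhabits 0) (fun m => univ V m = true /\ class_type V k m = class_type U k n /\
    class_rank V k m = class_rank U k n /\ class_pos V m = class_pos U n)).
  apply (realized_transfer (class_type U k n) (class_rank U k n) (class_pos U n)).
  now exists n.
Qed.

Lemma canonical_iso_is_isomorphism : is_isomorphism U V canonical_iso.
Proof.
  destruct inverse_isomorphism_data as [g [J [GH [HG [EQT BT]]]]].
  split; [split; [|split]|].
  - intros x Hx. apply canonical_iso_spec; auto.
  - intros x y Hx Hy E.
    destruct (canonical_iso_spec x Hx) as [A [B [C D]]], (canonical_iso_spec y Hy) as [A' [B' [C' D']]].
    rewrite E in *. apply (invariants_inj k EQS Hx Hy); congruence.
  - intros x y Hx Hy.
    destruct (canonical_iso_spec x Hx) as [A [B [C D]]], (canonical_iso_spec y Hy) as [A' [B' [C' D']]].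
    apply eq_true_iff_eq. rewrite (rel_iff_invariants k EQS Hx Hy), (rel_iff_invariants k EQT A A').
    rewrite B, C, B', C'. tauto.
  - intros z Hz.
    destruct (proj2 (realized_transfer (class_type V k z) (class_rank V k z) (class_pos V z)))
      as [x [Hx [E1 [E2 E3]]]]; [now exists z|].
    exists x. split; auto. destruct (canonical_iso_spec x Hx) as [A [B [C D]]].
    apply (invariants_inj k EQT A Hz); congruence.
Qed.

Definition canonical_graph (n m : nat) : bool :=
  if univ U n then
    univ V m && ((class_type U k n =? class_type V k m) &&
      ((class_rank U k n =? class_rank V k m) && (class_pos U n =? class_pos V m)))
  else m =? 0.

Lemma canonical_graph_spec n m : canonical_graph n m = (canonical_iso n =? m).
Proof.
  destruct inverse_isomorphism_data as [g [J [GH [HG [EQT BT]]]]].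
  apply eq_true_iff_eq. rewrite Nat.eqb_eq.
  unfold canonical_graph. destruct (univ U n) eqn:Hn.
  - destruct (canonical_iso_spec n Hn) as [A [B [C D]]]. split.
    + intros H. repeat (apply andb_prop in H; destruct H as [? H]). apply Nat.eqb_eq in H, H1, H2.
      apply (invariants_inj k EQT A); auto; congruence.
    + intros <-. now rewrite A, B, C, D, !Nat.eqb_refl.
  - unfold canonical_iso. rewrite Hn, Nat.eqb_eq. split; auto.
Qed.

End CanonicalIsomorphism.

Definition approx_rank (U : structure) (k x b : nat) : nat :=
  count (fun w => is_least U w && (capped_count U k w b =? capped_count U k x b)) (least_elt U x).

Definition approx_graph (U V : structure) (k n m b : nat) : bool :=
  if univ U n then
    univ V m && ((capped_count U k n b =? capped_count V k m b) &&
      ((approx_rank U k n b =? approx_rank V k m b) && (class_pos U n =? class_pos V m)))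
  else m =? 0.

Lemma approx_graph_stabilizes U V k n m :
  exists s, forall b, s <= b -> approx_graph U V k n m b = canonical_graph U V k n m.
Proof.
  set (s := sum_below (fun w => type_stage U k w + type_stage V k w) (S (n + m))).
  assert (Hs : forall w, w <= n + m -> type_stage U k w <= s /\ type_stage V k w <= s).
  { intros w Hw.
    pose proof (sum_below_ge (fun w => type_stage U k w + type_stage V k w) (S (n + m)) w).
    cbv beta in H. lia. }
  exists s. intros b Hb.
  assert (HS : forall w, w <= n + m -> capped_count U k w b = class_type U k w)
    by (intros w Hw; apply class_type_spec; specialize (Hs w Hw); lia).
  assert (HT : forall w, w <= n + m -> capped_count V k w b = class_type V k w)
    by (intros w Hw; apply class_type_spec; specialize (Hs w Hw); lia).
  unfold approx_graph, canonical_graph. rewrite HS, HT by lia.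
  assert (E1 : approx_rank U k n b = class_rank U k n).
  { unfold approx_rank, class_rank, least_of_type. apply count_ext. intros w Hw.
    pose proof (least_elt_le U n). rewrite !HS by lia. reflexivity. }
  assert (E2 : approx_rank V k m b = class_rank V k m).
  { unfold approx_rank, class_rank, least_of_type. apply count_ext. intros w Hw.
    pose proof (least_elt_le V m). rewrite !HT by lia. reflexivity. }
  now rewrite E1, E2.
Qed.

Definition b2n (b : bool) : nat := if b then 1 else 0.
Definition EAnd (a b : expr) : expr := EIf a b (ENum 0).
Definition EEq (a b : expr) : expr := EIsZero (EAdd (ESub a b) (ESub b a)).
Definition ELe (a b : expr) : expr := EIsZero (ESub a b).

Lemma eval_EIsZero X env a p : eval_expr X env a = b2n p -> eval_expr X env (EIsZero a) = b2n (negb p).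
Proof. simpl. intros ->. now destruct p. Qed.

Lemma eval_EAnd X env a b p q : eval_expr X env a = b2n p -> eval_expr X env b = b2n q ->
  eval_expr X env (EAnd a b) = b2n (p && q).
Proof. simpl. intros -> B. now destruct p. Qed.

Lemma eval_EEq X env a b :
  eval_expr X env (EEq a b) = b2n (eval_expr X env a =? eval_expr X env b).
Proof.
  simpl. destruct (Nat.eqb_spec (eval_expr X env a) (eval_expr X env b)) as [->|N].
  - now rewrite Nat.sub_diag.
  - destruct (_ - _ + (_ - _)) eqn:E; [lia|reflexivity].
Qed.

Lemma eval_ELe X env a b :
  eval_expr X env (ELe a b) = b2n (eval_expr X env a <=? eval_expr X env b).
Proof.
  simpl. destruct (Nat.leb_spec (eval_expr X env a) (eval_expr X env b)).
  - now replace (_ - _) with 0 by lia.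
  - destruct (_ - _) eqn:E; [lia|reflexivity].
Qed.

(* Shoenfield's limit lemma, in the direction needed: a function whose graph is
   the pointwise limit of an [X]-computable approximation is [Delta^0_2(X)]. *)
Lemma Delta02_fun_of_limit X (G : nat -> nat -> nat -> bool) (f : nat -> nat) e :
  (forall n m a b, eval_expr X [n; m; a; b] e = b2n (G n m b)) ->
  (forall n m, exists s, forall b, s <= b -> G n m b = (f n =? m)) ->
  Delta02_fun X f.
Proof.
  intros He Hlim.
  assert (Late : forall n m a b, eval_expr X [n; m; a; b] (ELe (EVar 2) (EVar 3)) = b2n (a <=? b))
    by (intros; apply eval_ELe).
  split.
  - exists (fun xs => eval_expr X xs (EAnd (ELe (EVar 2) (EVar 3)) (EIsZero e))).
    split; [apply computable_in_expr|]. intros n m.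
    assert (V : forall a b, eval_expr X [n; m; a; b] (EAnd (ELe (EVar 2) (EVar 3)) (EIsZero e))
                            = b2n ((a <=? b) && negb (G n m b)))
      by (intros; apply eval_EAnd; [apply Late|apply eval_EIsZero, He]).
    destruct (Hlim n m) as [s Hs]. split.
    + intros E. exists s. intros b. rewrite V.
      destruct (Nat.leb_spec s b); [|reflexivity]. now rewrite Hs, E, Nat.eqb_refl.
    + intros [a Ha]. specialize (Ha (a + s)). rewrite V, Hs in Ha by lia.
      rewrite (proj2 (Nat.leb_le a (a + s))) in Ha by lia.
      destruct (f n =? m) eqn:E; [now apply Nat.eqb_eq|discriminate].
  - exists (fun xs => eval_expr X xs (EIsZero (EAnd (ELe (EVar 2) (EVar 3)) e))).
    split; [apply computable_in_expr|]. intros n m.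
    assert (V : forall a b, eval_expr X [n; m; a; b] (EIsZero (EAnd (ELe (EVar 2) (EVar 3)) e))
                            = b2n (negb ((a <=? b) && G n m b)))
      by (intros; apply eval_EIsZero, eval_EAnd; [apply Late|apply He]).
    destruct (Hlim n m) as [s Hs]. split.
    + intros E a. exists (a + s). rewrite V, Hs, E, Nat.eqb_refl by lia.
      now rewrite (proj2 (Nat.leb_le a (a + s))) by lia.
    + intros Ha. destruct (Ha s) as [b Hb]. rewrite V in Hb.
      destruct (Nat.leb_spec s b); [|discriminate].
      rewrite Hs in Hb by auto. destruct (f n =? m) eqn:E; [now apply Nat.eqb_eq|discriminate].
Qed.

Fixpoint shift_expr (d : nat) (e : expr) : expr :=
  match e with
  | EVar i => if i <? d then EVar i else EVar (S i)
  | ENum n => ENum n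
  | EAdd a b => EAdd (shift_expr d a) (shift_expr d b)
  | ESub a b => ESub (shift_expr d a) (shift_expr d b)
  | EIsZero a => EIsZero (shift_expr d a)
  | EIf c t e => EIf (shift_expr d c) (shift_expr d t) (shift_expr d e)
  | EOracle a => EOracle (shift_expr d a)
  | ESum b body => ESum (shift_expr d b) (shift_expr (S d) body)
  end.

Lemma eval_shift_expr X e : forall pre env v,
  eval_expr X (pre ++ v :: env) (shift_expr (length pre) e) = eval_expr X (pre ++ env) e.
Proof.
  induction e; intros pre env v; simpl; try (rewrite ?IHe, ?IHe1, ?IHe2, ?IHe3; reflexivity).
  - destruct (Nat.ltb_spec i (length pre)); simpl.
    + now rewrite !app_nth1 by lia.
    + rewrite !app_nth2 by lia. now replace (S i - length pre) with (S (i - length pre)) by lia.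
  - rewrite IHe1. apply sum_below_ext. intros i. apply (IHe2 (i :: pre)).
Qed.

Definition lift_expr : expr -> expr := shift_expr 0.

Lemma eval_lift_expr X e v env : eval_expr X (v :: env) (lift_expr e) = eval_expr X env e.
Proof. apply (eval_shift_expr X e []). Qed.

Lemma sum_below_succ_double n : sum_below (fun i => i + 1) n * 2 = n * S n.
Proof. induction n; simpl; auto. nia. Qed.

Definition EPair (x y : expr) : expr := EAdd y (ESum (EAdd y x) (EAdd (EVar 0) (ENum 1))).

Lemma eval_EPair X env x y :
  eval_expr X env (EPair x y) = to_nat (eval_expr X env x, eval_expr X env y).
Proof.
  change (eval_expr X env (EPair x y)) with
    (eval_expr X env y + sum_below (fun i => i + 1) (eval_expr X env y + eval_expr X env x)).
  pose proof (to_nat_spec (eval_expr X env x) (eval_expr X env y)).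
  pose proof (sum_below_succ_double (eval_expr X env y + eval_expr X env x)).
  lia.
Qed.

(* In [join (diagram S) (diagram T)], position [4 x] (resp. [4 x + 1]) decides
   [univ S x] (resp. [univ T x]), and [4 t + 2] (resp. [4 t + 3]) decides [rel S x y]
   (resp. [rel T x y]) for [t = to_nat (x, y)]. *)
Definition EQuad (x : expr) : expr := EAdd (EAdd x x) (EAdd x x).
Definition EUniv (side : bool) (x : expr) : expr :=
  EOracle (EAdd (EQuad x) (ENum (if side then 1 else 0))).
Definition ERel (side : bool) (x y : expr) : expr :=
  EOracle (EAdd (EQuad (EPair x y)) (ENum (if side then 3 else 2))).

Section StructureBlocks.
Variables U V : structure.
Let O : oracle := join (diagram U) (diagram V).
Definition side_structure (side : bool) : structure := if side then V else U.

Lemma eval_EUniv env side x :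
  eval_expr O env (EUniv side x) = b2n (univ (side_structure side) (eval_expr O env x)).
Proof.
  unfold EUniv, EQuad. cbn [eval_expr]. set (v := eval_expr O env x). unfold O. destruct side.
  - replace (v + v + (v + v) + 1) with (S (2 * (2 * v))) by lia. unfold join, diagram.
    now rewrite Nat.even_succ, Nat.odd_even, Nat.div2_succ_double, Nat.even_even, Nat.div2_double.
  - replace (v + v + (v + v) + 0) with (2 * (2 * v)) by lia. unfold join, diagram.
    now rewrite Nat.even_even, Nat.div2_double, Nat.even_even, Nat.div2_double.
Qed.

Lemma eval_ERel env side x y : eval_expr O env (ERel side x y) =
  b2n (rel (side_structure side) (eval_expr O env x) (eval_expr O env y)).
Proof.
  unfold ERel, EQuad. cbn [eval_expr]. rewrite eval_EPair.
  set (t := to_nat _). unfold O. destruct side.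
  - replace (t + t + (t + t) + 3) with (S (2 * S (2 * t))) by lia. unfold join, diagram.
    rewrite Nat.even_succ, Nat.odd_even, Nat.div2_succ_double, Nat.even_succ, Nat.odd_even,
      Nat.div2_succ_double. unfold t. now rewrite cancel_of_to.
  - replace (t + t + (t + t) + 2) with (2 * S (2 * t)) by lia. unfold join, diagram.
    rewrite Nat.even_even, Nat.div2_double, Nat.even_succ, Nat.odd_even, Nat.div2_succ_double.
    unfold t. now rewrite cancel_of_to.
Qed.

Definition class_count_expr (side : bool) (x b : expr) : expr :=
  ESum b (EAnd (EUniv side (EVar 0)) (ERel side (lift_expr x) (EVar 0))).

Lemma eval_class_count_expr env side x b : eval_expr O env (class_count_expr side x b) =
  class_count (side_structure side) (eval_expr O env x) (eval_expr O env b).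
Proof.
  unfold class_count_expr, class_count, count. cbn [eval_expr]. apply sum_below_ext. intros i.
  erewrite eval_EAnd; [reflexivity|apply eval_EUniv|]. rewrite eval_ERel, eval_lift_expr. reflexivity.
Qed.

Definition capped_count_expr (side : bool) (k : nat) (x b : expr) : expr :=
  EIf (ELe (class_count_expr side x b) (ENum k)) (class_count_expr side x b) (ENum (S k)).

Lemma eval_capped_count_expr env side k x b : eval_expr O env (capped_count_expr side k x b) =
  capped_count (side_structure side) k (eval_expr O env x) (eval_expr O env b).
Proof.
  unfold capped_count_expr, capped_count. cbn [eval_expr].
  rewrite eval_ELe, eval_class_count_expr. cbn [eval_expr]. now destruct (_ <=? k).
Qed.

Definition least_elt_expr (side : bool) (x : expr) : expr :=
  ESum x (EEq (class_count_expr side (lift_expr x) (EAdd (EVar 0) (ENum 1))) (ENum 0)).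

Lemma eval_least_elt_expr env side x :
  eval_expr O env (least_elt_expr side x) = least_elt (side_structure side) (eval_expr O env x).
Proof.
  unfold least_elt_expr, least_elt, count. cbn [eval_expr]. apply sum_below_ext. intros i.
  rewrite eval_EEq, eval_class_count_expr, eval_lift_expr. cbn [eval_expr].
  now rewrite Nat.add_1_r.
Qed.

Definition is_least_expr (side : bool) (w : expr) : expr :=
  EAnd (EUniv side w) (EEq (least_elt_expr side w) w).

Lemma eval_is_least_expr env side w :
  eval_expr O env (is_least_expr side w) = b2n (is_least (side_structure side) (eval_expr O env w)).
Proof.
  apply eval_EAnd; [apply eval_EUniv|]. now rewrite eval_EEq, eval_least_elt_expr.
Qed.

Definition approx_rank_expr (side : bool) (k : nat) (x b : expr) : expr :=
  ESum (least_elt_expr side x) (EAnd (is_least_expr side (EVar 0))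
    (EEq (capped_count_expr side k (EVar 0) (lift_expr b))
         (capped_count_expr side k (lift_expr x) (lift_expr b)))).

Lemma eval_approx_rank_expr env side k x b : eval_expr O env (approx_rank_expr side k x b) =
  approx_rank (side_structure side) k (eval_expr O env x) (eval_expr O env b).
Proof.
  unfold approx_rank_expr, approx_rank, count. cbn [eval_expr].
  rewrite eval_least_elt_expr. apply sum_below_ext. intros i.
  erewrite eval_EAnd; [reflexivity|apply eval_is_least_expr|].
  now rewrite eval_EEq, !eval_capped_count_expr, !eval_lift_expr.
Qed.

(* Variables: 0 = n, 1 = m, 3 = b. *)
Definition approx_graph_expr (k : nat) : expr :=
  EIf (EUniv false (EVar 0))
    (EAnd (EUniv true (EVar 1))
      (EAnd (EEq (capped_count_expr false k (EVar 0) (EVar 3))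
                 (capped_count_expr true k (EVar 1) (EVar 3)))
        (EAnd (EEq (approx_rank_expr false k (EVar 0) (EVar 3))
                   (approx_rank_expr true k (EVar 1) (EVar 3)))
              (EEq (class_count_expr false (EVar 0) (EVar 0))
                   (class_count_expr true (EVar 1) (EVar 1))))))
    (EEq (EVar 1) (ENum 0)).

Lemma eval_approx_graph_expr k n m a b :
  eval_expr O [n; m; a; b] (approx_graph_expr k) = b2n (approx_graph U V k n m b).
Proof.
  unfold approx_graph_expr, approx_graph. cbn [eval_expr]. rewrite eval_EUniv.
  simpl side_structure. cbn [eval_expr nth]. destruct (univ U n); simpl b2n; cbv iota.
  - apply eval_EAnd; [apply eval_EUniv|]. apply eval_EAnd.
    { now rewrite eval_EEq, !eval_capped_count_expr. }
    apply eval_EAnd; [now rewrite eval_EEq, !eval_approx_rank_expr|].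
    now rewrite eval_EEq, !eval_class_count_expr.
  - apply eval_EEq.
Qed.

End StructureBlocks.

Theorem rel_Delta02_categorical_of_bounded_character S :
  is_equivalence_structure S -> bounded_character S -> rel_Delta02_categorical S.
Proof.
  intros EQ [k Hk] T [h I]. pose proof (large_classes_infinite_of_bound S k EQ Hk) as BS.
  exists (canonical_iso S T k). split; [exact (canonical_iso_is_isomorphism S T h k EQ BS I)|].
  apply (Delta02_fun_of_limit _ (approx_graph S T k) _ (approx_graph_expr k)).
  - apply eval_approx_graph_expr.
  - intros n m. destruct (approx_graph_stabilizes S T k n m) as [s Hs].
    exists s. intros b Hb. rewrite Hs by auto. apply (canonical_graph_spec S T h k EQ BS I).
Qed.

Definition unbounded (P : nat -> Prop) : Prop := forall N, exists z, N <= z /\ P z.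
Definition next_above (P : nat -> Prop) (a : nat) : nat := epsilon (inhabits 0) (fun z => P z /\ a < z).
Fixpoint enum_unbounded (P : nat -> Prop) (n : nat) : nat :=
  match n with 0 => next_above P 0 | S n => next_above P (enum_unbounded P n) end.

Lemma next_above_spec P a : unbounded P -> P (next_above P a) /\ a < next_above P a.
Proof.
  intros H. apply (epsilon_spec (inhabits 0) (fun z => P z /\ a < z)).
  destruct (H (S a)) as [z [L Pz]]. exists z. split; auto.
Qed.

Lemma enum_unbounded_spec P n : unbounded P -> P (enum_unbounded P n).
Proof. intros H. destruct n; simpl; apply next_above_spec; auto. Qed.

Lemma enum_unbounded_lt P n n' : unbounded P -> n < n' -> enum_unbounded P n < enum_unbounded P n'.
Proof.
  intros H. induction 1 as [|n' _ IH]; simpl; [apply next_above_spec; auto|].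
  pose proof (proj2 (next_above_spec P (enum_unbounded P n') H)). simpl. lia.
Qed.

Lemma enum_unbounded_inj P n n' : unbounded P -> enum_unbounded P n = enum_unbounded P n' -> n = n'.
Proof.
  intros H E. destruct (lt_eq_lt_dec n n') as [[L|L]|L]; auto.
  - pose proof (enum_unbounded_lt P n n' H L). lia.
  - pose proof (enum_unbounded_lt P n' n H L). lia.
Qed.

Lemma unbounded_of_infinite_class U x :
  ~ finite_set (eq_class U x) -> unbounded (fun y => univ U y = true /\ rel U x y = true).
Proof.
  intros NF N. apply NNPP. intros C. apply NF. exists (seq 0 N). intros y [Hy Ry]. apply in_seq.
  destruct (le_lt_dec N y); [|lia]. exfalso. apply C. exists y. auto.
Qed.

Lemma embedding_reflects_finite_class U V f x : is_embedding U V f -> univ U x = true ->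
  finite_set (eq_class V (f x)) -> finite_set (eq_class U x).
Proof.
  intros [Hu [Hi Hr]] Hx [l Hl].
  exists (map (fun z => epsilon (inhabits 0) (fun y => eq_class U x y /\ f y = z)) l).
  intros y [Uy Ry]. apply in_map_iff. exists (f y). split.
  - set (y' := epsilon _ _).
    assert (E : eq_class U x y' /\ f y' = f y)
      by (apply (epsilon_spec (inhabits 0) (fun y0 => eq_class U x y0 /\ f y0 = f y)); now exists y).
    destruct E as [[U' R'] E]. apply Hi; auto.
  - apply Hl. split; auto. rewrite <- Hr; auto.
Qed.

Definition col (z : nat) : nat := fst (of_nat z).
Definition row (z : nat) : nat := snd (of_nat z).
Definition same_col (x y : nat) : bool := col x =? col y.

Lemma col_to_nat i j : col (to_nat (i, j)) = i.
Proof. unfold col. now rewrite cancel_of_to. Qed.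

Lemma row_to_nat i j : row (to_nat (i, j)) = j.
Proof. unfold row. now rewrite cancel_of_to. Qed.

Lemma col_row_inj z z' : col z = col z' -> row z = row z' -> z = z'.
Proof.
  unfold col, row. intros A B. rewrite <- (cancel_to_of z), <- (cancel_to_of z').
  destruct (of_nat z), (of_nat z'). simpl in *. now subst.
Qed.

Definition fresh (C : list (nat * nat)) (P : list nat) : nat := S (list_max (P ++ map fst C)).

Lemma fresh_spec C P : ~ In (fresh C P) P /\ forall ib, In ib C -> fst ib <> fresh C P.
Proof.
  unfold fresh. split.
  - intros H. assert (H' : In (S (list_max (P ++ map fst C))) (P ++ map fst C))
      by (apply in_or_app; auto).
    apply in_le_list_max in H'. lia.
  - intros ib Hib E. assert (H : In (fst ib) (P ++ map fst C))
      by (apply in_or_app; right; apply in_map; auto).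
    apply in_le_list_max in H. lia.
Qed.

Lemma NoDup_snoc (l : list nat) a : NoDup l -> ~ In a l -> NoDup (l ++ [a]).
Proof.
  intros D N. apply NoDup_app; auto; [repeat constructor; auto|].
  intros y Hy [<-|[]]. contradiction.
Qed.

(* The structures built below have universe a subset of omega and, as classes,
   the columns of the Cantor pairing.  A condition approximates such a universe:
   [removed] elements are out, [(i, r) \in closed] removes the rows [>= r] of column
   [i] (so that this class is finite), [frozen] elements must stay in, and
   [protected] columns are never closed. *)
Record condition : Type := Condition
  { removed : list nat; closed : list (nat * nat); frozen : list nat; protected : list nat }.

Definition closed_at (C : list (nat * nat)) (z : nat) : bool :=
  existsb (fun ib => (col z =? fst ib) && (snd ib <=? row z)) C.
Definition present (p : condition) (z : nat) : bool :=
  negb (existsb (Nat.eqb z) (removed p)) && negb (closed_at (closed p) z).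
Definition cond_structure (p : condition) : structure := Struct (present p) same_col.

Lemma presentP p z : present p z = true <->
  ~ In z (removed p) /\ forall ib, In ib (closed p) -> ~ (col z = fst ib /\ snd ib <= row z).
Proof.
  unfold present, closed_at. rewrite andb_true_iff, !negb_true_iff, <- !not_true_iff_false.
  rewrite !existsb_exists. split.
  - intros [A B]. split.
    + intros H. apply A. exists z. now rewrite Nat.eqb_refl.
    + intros ib Hib [E L]. apply B. exists ib. rewrite andb_true_iff, Nat.eqb_eq, Nat.leb_le. auto.
  - intros [A B]. split.
    + intros [y [Hy E]]. apply Nat.eqb_eq in E. subst. auto.
    + intros [ib [Hib E]]. rewrite andb_true_iff, Nat.eqb_eq, Nat.leb_le in E. now apply (B ib).
Qed.

Definition valid (p : condition) : Prop := forall z, In z (frozen p) -> present p z = true.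
Definition extends (p q : condition) : Prop :=
  incl (removed p) (removed q) /\ incl (closed p) (closed q) /\ incl (frozen p) (frozen q) /\ valid q.
Definition avoids (p : condition) (B : list nat) : Prop :=
  forall ib, In ib (closed p) -> ~ In (fst ib) B.

Lemma extends_refl p : valid p -> extends p p.
Proof. intros; repeat split; auto; apply incl_refl. Qed.

Lemma extends_trans p q r : extends p q -> extends q r -> extends p r.
Proof. intros [A [B [C D]]] [A' [B' [C' D']]]. repeat split; auto; eapply incl_tran; eauto. Qed.

Lemma extends_present p q z : extends p q -> present q z = true -> present p z = true.
Proof. intros [A [B _]] H. apply presentP in H. apply presentP. destruct H as [H1 H2]. auto. Qed.

Lemma extends_frozen p q z : extends p q -> In z (frozen p) -> present q z = true.
Proof. intros [_ [_ [C D]]] H. auto. Qed.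

(* Position [u] of [join (diagram U) (diagram T)] asks about [univ T] only at
   [Nat.div2 (Nat.div2 u)]. *)
Definition queried_elts (Q : list nat) : list nat := map (fun u => Nat.div2 (Nat.div2 u)) Q.

Lemma agree_on_join_diagram (U T1 T2 : structure) Q : rel T1 = rel T2 ->
  (forall z, In z (queried_elts Q) -> univ T1 z = univ T2 z) ->
  agree_on (join (diagram U) (diagram T1)) (join (diagram U) (diagram T2)) Q.
Proof.
  intros R H u Hu. unfold join, diagram. destruct (Nat.even u), (Nat.even (Nat.div2 u)); auto.
  - symmetry. apply H, in_map_iff. eauto.
  - now rewrite R.
Qed.

Section Construction.
Variable M : structure.

Definition join_oracle (T : structure) : oracle := join (diagram M) (diagram T).

(* Read as the matrix of a Sigma^0_2 graph, code [c] says [forall b, c(x, m, a, b) = 0]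
   in every structure approximated by an extension of [q]. *)
Definition forces (q : condition) (c : code) (x m a : nat) : Prop :=
  forall q', extends q q' ->
    forall b v, eval (join_oracle (cond_structure q')) c [x; m; a; b] v -> v = 0.

Definition decision_witness (p : condition) (c : code) (t : nat * nat * nat * condition) : Prop :=
  let '(x, m, a, q) := t in
  univ M x = true /\ ~ finite_set (eq_class M x) /\ ~ In (col m) (protected p) /\
  extends p q /\ avoids q (protected p) /\ forces q c x m a.

Definition close_bound (F : list nat) : nat := S (list_max (map row F)).

(* Stage [2 n] diagonalizes against the [n]-th code: if some extension forces a
   [Sigma^0_2] witness for [f x = m] with [x] in an infinite class, close the column
   of [m]. *)
Definition decision_step (n : nat) (p : condition) : condition :=
  let c := nat_to_code n in
  let t := epsilon (inhabits (0, 0, 0, p)) (decision_witness p c) in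
  if excluded_middle_informative (decision_witness p c t) then
    let '(x, m, a, q) := t in
    let C' := (col m, close_bound (frozen q)) :: closed q in
    Condition (removed q) C' (frozen q) (protected p ++ [fresh C' (protected p)])
  else Condition (removed p) (closed p) (frozen p) (protected p ++ [fresh (closed p) (protected p)]).

Definition commit_witness (p : condition) (c : code) (xma : nat * nat * nat)
    (t : condition * nat * nat * list nat) : Prop :=
  let '(x, m, a) := xma in
  let '(q, b, v, Q) := t in
  extends p q /\ v <> 0 /\ eval (join_oracle (cond_structure q)) c [x; m; a; b] v /\
  forall Y, agree_on (join_oracle (cond_structure q)) Y Q -> eval Y c [x; m; a; b] v.

(* Keep [p], but adopt the answers of [q] on the elements queried by [Q]. *)
Definition commit (p q : condition) (Q : list nat) : condition :=
  Condition (removed p ++ filter (fun z => negb (present q z)) (queried_elts Q)) (closed p)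
    (frozen p ++ filter (present q) (queried_elts Q)) (protected p).

(* Make a nonzero value of code [n] at [(x, m, a, _)] permanent, if some extension has one. *)
Definition commit_step (w : nat) (p : condition) : condition :=
  let '(n, r1) := of_nat w in let '(x, r2) := of_nat r1 in let '(m, a) := of_nat r2 in
  let c := nat_to_code n in
  let t := epsilon (inhabits (p, 0, 0, [])) (commit_witness p c (x, m, a)) in
  if excluded_middle_informative (commit_witness p c (x, m, a) t) then
    let '(q, b, v, Q) := t in commit p q Q
  else p.

(* Freeze an element of the [e]-th protected column in a row [>= j]; its code is
   above every removed element. *)
Definition freeze_step (w : nat) (p : condition) : condition :=
  let '(e, j) := of_nat w in
  if e <? length (protected p) then
    Condition (removed p) (closed p)
      (to_nat (nth e (protected p) 0, j + S (list_max (removed p))) :: frozen p) (protected p)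
  else p.

(* Odd stages [2 s' + 1] run task [fst (of_nat s')]; the second component of [s']
   makes each task recur at arbitrarily late stages. *)
Definition step (s : nat) (p : condition) : condition :=
  if Nat.even s then decision_step (Nat.div2 s) p
  else let u := fst (of_nat (Nat.div2 s)) in
       if Nat.even u then commit_step (Nat.div2 u) p else freeze_step (Nat.div2 u) p.

Fixpoint stage (s : nat) : condition :=
  match s with 0 => Condition [] [] [] [] | S s => step s (stage s) end.

Definition invariant (p : condition) : Prop :=
  valid p /\ avoids p (protected p) /\ NoDup (protected p).

End Construction.

Section Stages.
Variable M : structure.

Lemma decision_step_props n p : invariant p ->
  invariant (decision_step M n p) /\ extends p (decision_step M n p) /\
  exists a, protected (decision_step M n p) = protected p ++ [a].
Proof.
  intros [Vp [Ap Np]]. unfold decision_step.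
  set (t := epsilon _ _). destruct (excluded_middle_informative _) as [Y|N].
  - destruct t as [[[x m] a] q]. destruct Y as [_ [_ [Hm [E [Aq _]]]]].
    set (C' := (col m, close_bound (frozen q)) :: closed q).
    destruct (fresh_spec C' (protected p)) as [Fr1 Fr2].
    assert (Val : valid (Condition (removed q) C' (frozen q) (protected p ++ [fresh C' (protected p)]))).
    { intros z Hz. destruct E as [_ [_ [_ Vq]]]. destruct (proj1 (presentP q z) (Vq z Hz)) as [P1 P2].
      apply presentP. split; auto. intros ib [<-|Hib]; auto. simpl. intros [_ L].
      assert (In (row z) (map row (frozen q))) by (apply in_map; auto).
      apply in_le_list_max in H. unfold close_bound in L. lia. }
    split; [split; [|split]|split].
    + exact Val.
    + intros ib Hib Hin. apply in_app_or in Hin. destruct Hin as [Hin|[Hin|[]]].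
      * destruct Hib as [<-|Hib]; [exact (Hm Hin)|exact (Aq ib Hib Hin)].
      * apply (Fr2 ib); auto.
    + apply NoDup_snoc; auto.
    + destruct E as [A [B [C _]]]. repeat split; auto. intros y Hy. right. apply B; auto.
    + eexists. reflexivity.
  - destruct (fresh_spec (closed p) (protected p)) as [Fr1 Fr2].
    set (P' := protected p ++ [fresh (closed p) (protected p)]).
    assert (Val : valid (Condition (removed p) (closed p) (frozen p) P'))
      by (intros z Hz; exact (Vp z Hz)).
    split; [split; [|split]|split].
    + exact Val.
    + intros ib Hib Hin. apply in_app_or in Hin. destruct Hin as [Hin|[Hin|[]]].
      * apply (Ap ib); auto.
      * apply (Fr2 ib); auto.
    + apply NoDup_snoc; auto.
    + repeat split; try apply incl_refl. exact Val.
    + eexists. reflexivity.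
Qed.

Lemma commit_present p q Q z : extends p q -> present q z = true -> present (commit p q Q) z = true.
Proof.
  intros [A [B _]] H. pose proof H as H0. apply presentP in H as [H1 H2]. apply presentP. split.
  - intros Hz. apply in_app_or in Hz as [Hz|Hz]; [apply H1, A; auto|].
    apply filter_In in Hz as [_ Hz]. rewrite H0 in Hz. discriminate.
  - intros ib Hib. apply H2, B; auto.
Qed.

Lemma commit_agree p q Q z : extends p q -> In z (queried_elts Q) ->
  present (commit p q Q) z = present q z.
Proof.
  intros E HV. destruct (present q z) eqn:P; [apply commit_present; auto|].
  apply not_true_iff_false. intros Hc. apply presentP in Hc as [Hc _]. apply Hc.
  apply in_or_app. right. apply filter_In. rewrite P. auto.
Qed.

Lemma commit_props p q Q : invariant p -> extends p q ->
  invariant (commit p q Q) /\ extends p (commit p q Q).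
Proof.
  intros [Vp [Ap Np]] E.
  assert (Val : valid (commit p q Q)).
  { intros z Hz. apply in_app_or in Hz as [Hz|Hz]; apply commit_present; auto.
    - apply (extends_frozen _ _ _ E); auto.
    - apply filter_In in Hz. tauto. }
  split; [repeat split; auto|].
  repeat split; auto; intros y Hy; simpl; auto; apply in_or_app; auto.
Qed.

Lemma commit_step_props w p : invariant p ->
  invariant (commit_step M w p) /\ extends p (commit_step M w p) /\
  protected (commit_step M w p) = protected p.
Proof.
  intros IP. unfold commit_step.
  destruct (of_nat w) as [n r1], (of_nat r1) as [x r2], (of_nat r2) as [m a].
  set (t := epsilon _ _). destruct (excluded_middle_informative _) as [Y|N].
  - destruct t as [[[q b] v] Q]. destruct Y as [E _]. destruct (commit_props p q Q IP E). auto.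
  - split; [|split]; auto. apply extends_refl, IP.
Qed.

Lemma freeze_step_props w p : invariant p ->
  invariant (freeze_step w p) /\ extends p (freeze_step w p) /\
  protected (freeze_step w p) = protected p.
Proof.
  intros [Vp [Ap Np]]. unfold freeze_step. destruct (of_nat w) as [e j].
  destruct (Nat.ltb_spec e (length (protected p))) as [L|L].
  - set (z0 := to_nat (nth e (protected p) 0, j + S (list_max (removed p)))).
    assert (Pz : present p z0 = true).
    { apply presentP. split.
      - intros Hz. apply in_le_list_max in Hz.
        pose proof (to_nat_non_decreasing (nth e (protected p) 0) (j + S (list_max (removed p)))).
        unfold z0 in Hz. lia.
      - intros ib Hib [E1 _]. unfold z0 in E1. rewrite col_to_nat in E1.
        apply (Ap ib Hib). rewrite <- E1. apply nth_In; auto. }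
    assert (Val : valid (Condition (removed p) (closed p) (z0 :: frozen p) (protected p))).
    { intros z [<-|Hz]; [exact Pz|exact (Vp z Hz)]. }
    split; [repeat split; auto|split; auto].
    repeat split; try apply incl_refl; auto. intros y Hy; right; auto.
  - split; [repeat split; auto|split; auto]. apply extends_refl; auto.
Qed.

Lemma step_props s p : invariant p ->
  invariant (step M s p) /\ extends p (step M s p) /\
  exists l, protected (step M s p) = protected p ++ l /\ length l = if Nat.even s then 1 else 0.
Proof.
  intros IP. unfold step. destruct (Nat.even s).
  - destruct (decision_step_props (Nat.div2 s) p IP) as [A [B [a C]]].
    split; [exact A|split; [exact B|now exists [a]]].
  - destruct (Nat.even _);
      [destruct (commit_step_props (Nat.div2 (fst (of_nat (Nat.div2 s)))) p IP) as [A [B C]]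
      |destruct (freeze_step_props (Nat.div2 (fst (of_nat (Nat.div2 s)))) p IP) as [A [B C]]];
      (split; [exact A|split; [exact B|exists []; now rewrite app_nil_r]]).
Qed.

Lemma stage_invariant s : invariant (stage M s).
Proof.
  induction s; [|apply step_props; auto].
  split; [|split]; [intros z []|intros ib []|constructor].
Qed.

Lemma stage_extends_le s s' : s <= s' -> extends (stage M s) (stage M s').
Proof.
  induction 1; [apply extends_refl, stage_invariant|].
  eapply extends_trans; eauto. apply step_props, stage_invariant.
Qed.

Lemma stage_protected_prefix s s' : s <= s' ->
  exists l, protected (stage M s') = protected (stage M s) ++ l.
Proof.
  induction 1 as [|s' _ [l Hl]]; [exists []; now rewrite app_nil_r|].
  destruct (step_props s' _ (stage_invariant s')) as [_ [_ [l' [E _]]]].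
  exists (l ++ l'). simpl. now rewrite E, Hl, app_assoc.
Qed.

Lemma stage_protected_length_S s :
  length (protected (stage M (S s))) = length (protected (stage M s)) + if Nat.even s then 1 else 0.
Proof.
  destruct (step_props s _ (stage_invariant s)) as [_ [_ [l [E L]]]].
  simpl. now rewrite E, length_app, L.
Qed.

Lemma stage_protected_length n :
  length (protected (stage M (2 * n))) = n /\ length (protected (stage M (S (2 * n)))) = S n.
Proof.
  assert (Ev : forall n,
             length (protected (stage M (S (2 * n)))) = S (length (protected (stage M (2 * n)))))
    by (intros; rewrite stage_protected_length_S, Nat.even_mul; simpl; lia).
  induction n as [|n [_ IH]]; [split; [reflexivity|apply (Ev 0)]|].
  assert (Od : length (protected (stage M (2 * S n))) = S n).
  { replace (2 * S n) with (S (S (2 * n))) by lia.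
    rewrite stage_protected_length_S, IH, Nat.even_succ, Nat.odd_mul. simpl. lia. }
  split; [exact Od|]. now rewrite Ev, Od.
Qed.

Lemma step_decision n p : step M (2 * n) p = decision_step M n p.
Proof. unfold step. now rewrite Nat.even_mul, Nat.div2_double. Qed.

Lemma step_commit s' w p : fst (of_nat s') = 2 * w -> step M (S (2 * s')) p = commit_step M w p.
Proof.
  intros E. unfold step. rewrite Nat.even_succ, Nat.odd_mul, Nat.div2_succ_double, E.
  simpl Nat.odd. now rewrite Nat.even_mul, Nat.div2_double.
Qed.

Lemma step_freeze s' w p : fst (of_nat s') = S (2 * w) -> step M (S (2 * s')) p = freeze_step w p.
Proof.
  intros E. unfold step. rewrite Nat.even_succ, Nat.odd_mul, Nat.div2_succ_double, E.
  simpl Nat.odd. now rewrite Nat.even_succ, Nat.odd_mul, Nat.div2_succ_double.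
Qed.

Lemma decision_step_spec n p : invariant p ->
  (exists x m a q r, decision_witness M p (nat_to_code n) (x, m, a, q) /\
     extends q (decision_step M n p) /\ In (col m, r) (closed (decision_step M n p))) \/
  ~ (exists t, decision_witness M p (nat_to_code n) t).
Proof.
  intros IP. destruct (decision_step_props n p IP) as [[V _] _]. revert V.
  unfold decision_step. set (t := epsilon _ _).
  destruct (excluded_middle_informative _) as [Y|N]; intros V.
  - left. destruct t as [[[x m] a] q]. exists x, m, a, q, (close_bound (frozen q)).
    split; [exact Y|split; [|now left]].
    repeat split; try apply incl_refl; [apply incl_tl, incl_refl|exact V].
  - right. intros Ex. apply N.
    now apply (epsilon_spec (inhabits (0, 0, 0, p)) (decision_witness M p (nat_to_code n))).
Qed.

Lemma commit_step_spec w n x m a p : w = to_nat (n, to_nat (x, to_nat (m, a))) ->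
  (exists t, commit_witness M p (nat_to_code n) (x, m, a) t) ->
  exists q b v Q, commit_witness M p (nat_to_code n) (x, m, a) (q, b, v, Q) /\
    commit_step M w p = commit p q Q.
Proof.
  intros -> Ex. unfold commit_step. rewrite !cancel_of_to.
  set (t := epsilon _ _). destruct (excluded_middle_informative _) as [Y|N].
  - destruct t as [[[q b] v] Q]. exists q, b, v, Q. auto.
  - exfalso. apply N.
    now apply (epsilon_spec (inhabits (p, 0, 0, [])) (commit_witness M p (nat_to_code n) (x, m, a))).
Qed.

Lemma freeze_step_spec e j p : e < length (protected p) ->
  In (to_nat (nth e (protected p) 0, j + S (list_max (removed p))))
     (frozen (freeze_step (to_nat (e, j)) p)).
Proof.
  intros L. unfold freeze_step. rewrite cancel_of_to.
  destruct (Nat.ltb_spec e (length (protected p))); [now left|lia].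
Qed.

End Stages.

Section Limit.
Variable M : structure.

Definition limit_univ (z : nat) : bool :=
  if excluded_middle_informative (forall s, present (stage M s) z = true) then true else false.
Definition limit_structure : structure := Struct limit_univ same_col.

Lemma limit_univP z : limit_univ z = true <-> forall s, present (stage M s) z = true.
Proof. unfold limit_univ. destruct (excluded_middle_informative _); split; auto; discriminate. Qed.

Lemma frozen_in_limit s z : In z (frozen (stage M s)) -> limit_univ z = true.
Proof.
  intros H. apply limit_univP. intros s'. destruct (le_lt_dec s s') as [L|L].
  - apply (extends_frozen _ _ _ (stage_extends_le M s s' L)); auto.
  - apply (extends_present _ _ _ (stage_extends_le M s' s (Nat.lt_le_incl _ _ L))).
    apply (stage_invariant M s); auto.
Qed.

Lemma absent_from_limit s z : present (stage M s) z = false -> limit_univ z = false.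
Proof.
  intros H. apply not_true_iff_false. intros E. rewrite (proj1 (limit_univP z) E) in H. discriminate.
Qed.

Lemma stage_agrees_with_limit V :
  exists s0, forall s, s0 <= s -> forall z, In z V -> present (stage M s) z = limit_univ z.
Proof.
  induction V as [|z V [s0 H0]]; [exists 0; intros s _ z []|].
  destruct (limit_univ z) eqn:E.
  - exists s0. intros s Hs y [<-|Hy]; auto. rewrite E. now apply limit_univP.
  - assert (Ex : exists s1, present (stage M s1) z = false).
    { apply NNPP. intros N. apply not_true_iff_false in E. apply E, limit_univP. intros s.
      apply NNPP. intros F. apply N. exists s. now apply not_true_iff_false. }
    destruct Ex as [s1 H1]. exists (s0 + s1). intros s Hs y [<-|Hy]; [|apply H0; auto; lia].
    rewrite E. apply not_true_iff_false. intros P.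
    rewrite (extends_present _ _ _ (stage_extends_le M s1 s ltac:(lia)) P) in H1. discriminate.
Qed.

(* Every computation uses finitely many oracle positions, which are eventually
   decided as in the limit. *)
Lemma forces_limit q c x m a s1 : forces M q c x m a ->
  (forall s, s1 <= s -> extends q (stage M s)) ->
  forall b v, eval (join_oracle M limit_structure) c [x; m; a; b] v -> v = 0.
Proof.
  intros Fq Hq b v Ev. destruct (eval_finite_use Ev) as [Q HQ].
  destruct (stage_agrees_with_limit (queried_elts Q)) as [s0 H0].
  apply (Fq (stage M (s0 + s1)) (Hq (s0 + s1) ltac:(lia)) b v), HQ.
  apply agree_on_join_diagram; [reflexivity|]. intros z Hz. symmetry. apply H0; auto. lia.
Qed.

Lemma commit_limit s q Q c xs v : extends (stage M s) q ->
  stage M (S s) = commit (stage M s) q Q ->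
  (forall Y, agree_on (join_oracle M (cond_structure q)) Y Q -> eval Y c xs v) ->
  eval (join_oracle M limit_structure) c xs v.
Proof.
  intros E St HY. apply HY, agree_on_join_diagram; [reflexivity|]. intros z Hz. simpl.
  rewrite <- (commit_agree _ q Q z E Hz), <- St.
  destruct (present (stage M (S s)) z) eqn:P.
  - symmetry. apply (frozen_in_limit (S s)). rewrite St. apply in_or_app. right.
    apply filter_In. split; auto. rewrite St, (commit_agree _ q Q z E Hz) in P. auto.
  - symmetry. apply (absent_from_limit (S s)); auto.
Qed.

Lemma closed_column_finite s i r z : In (i, r) (closed (stage M s)) -> col z = i ->
  finite_set (eq_class limit_structure z).
Proof.
  intros Hc Hz. exists (map (fun j => to_nat (i, j)) (seq 0 r)).
  intros y [Uy Ry]. simpl in Uy, Ry. unfold same_col in Ry. apply Nat.eqb_eq in Ry.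
  apply (proj1 (limit_univP y)) with (s := s), presentP in Uy as [_ Uy].
  assert (Lr : row y < r).
  { apply Nat.nlt_ge. intros L. apply (Uy (i, r) Hc). simpl. lia. }
  apply in_map_iff. exists (row y). split.
  - apply col_row_inj; rewrite ?col_to_nat, ?row_to_nat; congruence.
  - apply in_seq. lia.
Qed.

Definition protected_col (e : nat) : nat := nth e (protected (stage M (S (2 * e)))) 0.

Lemma protected_col_stable e s : S (2 * e) <= s -> nth e (protected (stage M s)) 0 = protected_col e.
Proof.
  intros L. destruct (stage_protected_prefix M _ _ L) as [l ->]. unfold protected_col.
  apply app_nth1. rewrite (proj2 (stage_protected_length M e)). lia.
Qed.

Lemma protected_col_inj e e' : protected_col e = protected_col e' -> e = e'.
Proof.
  intros E. set (s := S (2 * (e + e'))).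
  rewrite <- (protected_col_stable e s), <- (protected_col_stable e' s) in E by (unfold s; lia).
  destruct (stage_invariant M s) as [_ [_ ND]].
  assert (Ls : length (protected (stage M s)) = S (e + e')) by apply stage_protected_length.
  apply (proj1 (NoDup_nth (protected (stage M s)) 0) ND); auto; lia.
Qed.

Lemma protected_col_unbounded e : unbounded (fun z => limit_univ z = true /\ col z = protected_col e).
Proof.
  intros N. set (s' := to_nat (S (2 * to_nat (e, N)), e)). set (s := S (2 * s')).
  assert (Hs' : e <= s')
    by (pose proof (to_nat_non_decreasing (S (2 * to_nat (e, N))) e); unfold s'; lia).
  assert (L : e < length (protected (stage M s)))
    by (unfold s; rewrite (proj2 (stage_protected_length M s')); lia).
  set (z := to_nat (nth e (protected (stage M s)) 0, N + S (list_max (removed (stage M s))))).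
  exists z. split; [|split].
  - pose proof (to_nat_non_decreasing (nth e (protected (stage M s)) 0)
                  (N + S (list_max (removed (stage M s))))). unfold z; lia.
  - apply (frozen_in_limit (S s)). cbn [stage]. unfold s at 1.
    rewrite (step_freeze M s' (to_nat (e, N))) by (unfold s'; now rewrite cancel_of_to).
    now apply freeze_step_spec.
  - unfold z. rewrite col_to_nat. apply protected_col_stable. unfold s; lia.
Qed.

End Limit.

Section Embeddings.
Variable M : structure.
Hypotheses (EQ : is_equivalence_structure M) (IM : infinitely_many_infinite_classes M).

Definition fresh_infinite_class (l : list nat) (x : nat) : Prop :=
  univ M x = true /\ ~ finite_set (eq_class M x) /\ forall y, In y l -> rel M x y = false.

Lemma fresh_infinite_class_exists l : (forall y, In y l -> univ M y = true) ->
  exists x, fresh_infinite_class l x.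
Proof.
  intros Hl. apply NNPP. intros N. apply IM. exists l. intros x Hx NF.
  apply NNPP. intros N2. apply N. exists x. repeat split; auto. intros y Hy.
  apply not_true_iff_false. intros E. apply N2. exists y. auto.
Qed.

Definition pick_fresh_infinite (l : list nat) : nat := epsilon (inhabits 0) (fresh_infinite_class l).

Fixpoint reps (n : nat) : list nat :=
  match n with 0 => [] | S n => reps n ++ [pick_fresh_infinite (reps n)] end.

Definition rep (i : nat) : nat := pick_fresh_infinite (reps i).

Lemma reps_univ n : forall y, In y (reps n) -> univ M y = true.
Proof.
  induction n; simpl; [intros _ []|].
  intros y Hy. apply in_app_or in Hy as [Hy|[<-|[]]]; auto.
  apply (epsilon_spec (inhabits 0) (fresh_infinite_class (reps n))), fresh_infinite_class_exists; auto.
Qed.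

Lemma rep_spec i : fresh_infinite_class (reps i) (rep i).
Proof.
  apply (epsilon_spec (inhabits 0) (fresh_infinite_class (reps i))), fresh_infinite_class_exists.
  apply reps_univ.
Qed.

Lemma reps_map n : reps n = map rep (seq 0 n).
Proof. induction n; auto. rewrite seq_S, map_app. simpl. now rewrite <- IHn. Qed.

Lemma rep_unrelated i j : i <> j -> rel M (rep i) (rep j) = false.
Proof.
  intros N. destruct EQ as [R [Sy Tr]].
  assert (Hin : forall i j, i < j -> In (rep i) (reps j))
    by (intros; rewrite reps_map; apply in_map, in_seq; lia).
  destruct (lt_eq_lt_dec i j) as [[L|L]|L]; [|lia|apply (rep_spec i), Hin; auto].
  apply not_true_iff_false. intros E.
  assert (F : rel M (rep j) (rep i) = false) by (apply (rep_spec j), Hin; auto).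
  rewrite (Sy _ _ (proj1 (rep_spec i)) (proj1 (rep_spec j)) E) in F. discriminate.
Qed.

Definition in_rep_class (i y : nat) : Prop := univ M y = true /\ rel M (rep i) y = true.

Definition limit_to_M (z : nat) : nat := enum_unbounded (in_rep_class (col z)) (row z).

Lemma in_rep_class_unbounded i : unbounded (in_rep_class i).
Proof. apply unbounded_of_infinite_class, rep_spec. Qed.

Lemma in_rep_class_unique i j y : in_rep_class i y -> in_rep_class j y -> i = j.
Proof.
  intros [U1 R1] [U2 R2]. destruct (Nat.eq_dec i j) as [|N]; auto. exfalso.
  destruct EQ as [R [Sy Tr]]. pose proof (rep_spec i) as [Ui _]. pose proof (rep_spec j) as [Uj _].
  assert (E : rel M (rep i) (rep j) = true) by (apply (Tr _ y _); auto).
  rewrite rep_unrelated in E; auto. discriminate.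
Qed.

Lemma limit_to_M_spec z : in_rep_class (col z) (limit_to_M z).
Proof. unfold limit_to_M. apply enum_unbounded_spec, in_rep_class_unbounded. Qed.

Lemma limit_to_M_embedding : is_embedding (limit_structure M) M limit_to_M.
Proof.
  split; [|split].
  - intros z _. apply limit_to_M_spec.
  - intros z z' _ _ E. pose proof (limit_to_M_spec z) as A. pose proof (limit_to_M_spec z') as B.
    rewrite E in A. pose proof (in_rep_class_unique _ _ _ A B) as C. unfold limit_to_M in E.
    rewrite C in E. apply col_row_inj; auto.
    apply (enum_unbounded_inj _ _ _ (in_rep_class_unbounded _) E).
  - intros z z' _ _. simpl. unfold same_col.
    pose proof (limit_to_M_spec z) as [A1 A2]. pose proof (limit_to_M_spec z') as [B1 B2].
    destruct EQ as [R [Sy Tr]].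
    pose proof (rep_spec (col z)) as [Ui _]. pose proof (rep_spec (col z')) as [Uj _].
    destruct (Nat.eqb_spec (col z) (col z')) as [E|E].
    + rewrite E in A2. symmetry. apply (Tr _ (rep (col z')) _); auto.
    + symmetry. apply not_true_iff_false. intros G. apply E.
      apply (in_rep_class_unique _ _ (limit_to_M z')); split; auto. apply (Tr _ (limit_to_M z) _); auto.
Qed.

Definition in_protected_col (x z : nat) : Prop :=
  limit_univ M z = true /\ col z = protected_col M (least_elt M x).

Definition M_to_limit (x : nat) : nat := enum_unbounded (in_protected_col x) x.

Lemma M_to_limit_spec x : in_protected_col x (M_to_limit x).
Proof. unfold M_to_limit. apply enum_unbounded_spec, protected_col_unbounded. Qed.

Lemma M_to_limit_embedding : is_embedding M (limit_structure M) M_to_limit.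
Proof.
  split; [|split].
  - intros x _. apply M_to_limit_spec.
  - intros x y Hx Hy E. pose proof (M_to_limit_spec x) as [_ A]. pose proof (M_to_limit_spec y) as [_ B].
    rewrite E, B in A. apply protected_col_inj in A. unfold M_to_limit, in_protected_col in E.
    rewrite A in E. exact (enum_unbounded_inj _ _ _ (protected_col_unbounded _ _) E).
  - intros x y Hx Hy. simpl. unfold same_col.
    pose proof (M_to_limit_spec x) as [_ A]. pose proof (M_to_limit_spec y) as [_ B]. rewrite A, B.
    destruct (rel M x y) eqn:R.
    + rewrite (least_elt_ext EQ Hx Hy R). symmetry. apply Nat.eqb_refl.
    + symmetry. apply not_true_iff_false. intros P. apply Nat.eqb_eq, protected_col_inj in P.
      rewrite (rel_of_least_elt_eq EQ Hx Hy P) in R. discriminate.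
Qed.

Lemma bi_embeddable_limit : bi_embeddable M (limit_structure M).
Proof.
  split; [exists M_to_limit; apply M_to_limit_embedding|].
  exists limit_to_M. apply limit_to_M_embedding.
Qed.

End Embeddings.

Section Diagonalization.
Variable M : structure.
Hypotheses (EQ : is_equivalence_structure M) (IM : infinitely_many_infinite_classes M).
Variables (f : nat -> nat) (r : list nat -> nat) (c : code).
Hypotheses (Ef : is_embedding M (limit_structure M) f)
  (Hc : forall xs, length xs = 4 -> eval (join_oracle M (limit_structure M)) c xs (r xs))
  (Hgraph : forall x m, f x = m <-> exists a, forall b, r [x; m; a; b] = 0).

Let n : nat := code_to_nat c.

Lemma eval_graph_code x m a b :
  eval (join_oracle M (limit_structure M)) c [x; m; a; b] (r [x; m; a; b]).
Proof. now apply Hc. Qed.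

(* A forced witness for [f x = m] makes the class of [f x], hence of [x], finite. *)
Lemma no_decision_witness : ~ exists t, decision_witness M (stage M (2 * n)) c t.
Proof.
  intros Ex.
  destruct (decision_step_spec M n _ (stage_invariant M (2 * n)))
    as [[x [m [a [q [bnd [Pd [Eq Hcl]]]]]]]|N];
    unfold n in *; rewrite code_to_natK in *; [|contradiction].
  destruct Pd as [Hx [NF [_ [_ [_ Fq]]]]]. set (k := code_to_nat c) in *.
  rewrite <- step_decision in Eq, Hcl.
  change (step M (2 * k) (stage M (2 * k))) with (stage M (S (2 * k))) in Eq, Hcl.
  assert (HQ : forall s, S (2 * k) <= s -> extends q (stage M s))
    by (intros s Hs; apply extends_trans with (1 := Eq), stage_extends_le, Hs).
  assert (fxm : f x = m).
  { apply Hgraph. exists a. intros b. apply (forces_limit M q c x m a _ Fq HQ b), eval_graph_code. }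
  apply NF, (embedding_reflects_finite_class _ _ _ _ Ef Hx). rewrite fxm.
  exact (closed_column_finite M _ _ _ _ Hcl eq_refl).
Qed.

(* Pigeonhole: [f] sends the [n + 1] representatives to distinct columns, while only
   [n] columns are protected at stage [2 n]. *)
Lemma unprotected_rep : exists t, ~ In (col (f (rep M t))) (protected (stage M (2 * n))).
Proof.
  set (B := protected (stage M (2 * n))). set (cols := map (fun t => col (f (rep M t))) (seq 0 (S n))).
  assert (LB : length B = n) by apply stage_protected_length.
  apply NNPP. intros N.
  assert (ND : NoDup cols).
  { apply NoDup_map_NoDup_ForallPairs; [|apply seq_NoDup]. intros t t' _ _ Et.
    apply NNPP. intros e. destruct Ef as [Uf [_ Rf]].
    pose proof (Rf _ _ (proj1 (rep_spec M IM t)) (proj1 (rep_spec M IM t'))) as R.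
    rewrite (rep_unrelated M EQ IM _ _ e) in R. simpl in R. unfold same_col in R.
    rewrite Et, Nat.eqb_refl in R. discriminate. }
  assert (Sub : incl cols B).
  { intros y Hy. apply in_map_iff in Hy as [t [<- _]]. apply NNPP. intros Ny. apply N. now exists t. }
  pose proof (NoDup_incl_length ND Sub). unfold cols in H. rewrite length_map, length_seq in H. lia.
Qed.

(* A true witness [a] for [f x = m] is forced at the stage that commits nonzero
   values of code [n] at [(x, m, a, _)]: otherwise such a value would be committed
   and survive in the limit. *)
Lemma forced_at_commit_stage x m a s' : (forall b, r [x; m; a; b] = 0) ->
  fst (of_nat s') = 2 * to_nat (n, to_nat (x, to_nat (m, a))) ->
  forces M (stage M (S (2 * s'))) c x m a.
Proof.
  intros Ha F. set (s := S (2 * s')). apply NNPP. intros NotF.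
  assert (Ex : exists q' b v, extends (stage M s) q' /\
                 eval (join_oracle M (cond_structure q')) c [x; m; a; b] v /\ v <> 0).
  { apply NNPP. intros N. apply NotF. intros q' E b v Ev.
    apply NNPP. intros Nv. apply N. now exists q', b, v. }
  destruct Ex as [q' [b [v [E [Ev Nv]]]]]. destruct (eval_finite_use Ev) as [Q HQ].
  destruct (commit_step_spec M _ n x m a (stage M s) eq_refl) as [q [b' [v' [Q' [Pt Ts]]]]].
  { exists (q', b, v, Q). unfold n. rewrite code_to_natK. simpl. auto. }
  unfold n in Pt. rewrite code_to_natK in Pt. destruct Pt as [E' [Nv' [_ HQ']]].
  assert (St : stage M (S s) = commit (stage M s) q Q')
    by (cbn [stage]; unfold s at 1; rewrite (step_commit M s' _ _ F); exact Ts).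
  apply Nv'. rewrite <- (Ha b').
  exact (eval_deterministic (commit_limit M s q Q' c _ v' E' St HQ') (eval_graph_code x m a b')).
Qed.

Lemma decision_witness_exists : exists t, decision_witness M (stage M (2 * n)) c t.
Proof.
  destruct unprotected_rep as [t Ht]. pose proof (rep_spec M IM t) as [Ux [NFx _]].
  set (x := rep M t) in *. set (m := f x) in *. destruct (proj1 (Hgraph x m) eq_refl) as [a Ha].
  set (w := to_nat (n, to_nat (x, to_nat (m, a)))). set (s' := to_nat (2 * w, n)).
  assert (F : fst (of_nat s') = 2 * w) by (unfold s'; now rewrite cancel_of_to).
  assert (Lns : 2 * n <= S (2 * s')) by (pose proof (to_nat_non_decreasing (2 * w) n); unfold s'; lia).
  destruct (stage_invariant M (S (2 * s'))) as [_ [Av _]].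
  destruct (stage_protected_prefix M _ _ Lns) as [l El].
  exists (x, m, a, stage M (S (2 * s'))).
  refine (conj Ux (conj NFx (conj Ht (conj (stage_extends_le M _ _ Lns) (conj _ _))))).
  - intros ib Hib Hin. apply (Av ib Hib). rewrite El. apply in_or_app. auto.
  - exact (forced_at_commit_stage x m a s' Ha F).
Qed.

End Diagonalization.

Theorem not_rel_Delta02_biemb_categorical M : is_equivalence_structure M ->
  infinitely_many_infinite_classes M -> ~ rel_Delta02_biemb_categorical M.
Proof.
  intros EQ IM Hcat.
  destruct (Hcat _ (bi_embeddable_limit M EQ IM)) as [f [g [Ef [_ [[[r [[c Hc] Hgraph]] _] _]]]]].
  exact (no_decision_witness M f r c Ef Hc Hgraph (decision_witness_exists M EQ IM f r c Ef Hc Hgraph)).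
Qed.

Theorem corollary3p7 (S : structure) :
  is_equivalence_structure S ->
  bounded_character S ->
  infinitely_many_infinite_classes S ->
  rel_Delta02_categorical S /\ ~ rel_Delta02_biemb_categorical S.
Proof.
  intros EQ BC IM. split.
  - exact (rel_Delta02_categorical_of_bounded_character S EQ BC).
  - exact (not_rel_Delta02_biemb_categorical S EQ IM).
Qed.
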